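(* Let $M=\begin{pmatrix}A&B\\ C&D\end{pmatrix}$ be an operator matrix on $X\oplus Y$, where $A\in\mathcal{L}(X)$ and $D\in\mathcal{L}(Y)$ have g-Drazin inverses, $B\in\mathcal{L}(Y,X)$, $C\in\mathcal{L}(X,Y)$. If $ABC=0$, $ABD=0$, $DCB=0$ and $CBCB=0$, then $M$ has a g-Drazin inverse in $\mathcal{L}(X\oplus Y)$.
   Context: $X,Y$ are complex Banach spaces; $\mathcal{L}(X)$ denotes the Banach algebra of bounded linear operators on $X$, and $\mathcal{L}(Y,X)$ the bounded operators from $Y$ to $X$. An element $a$ of a unital Banach algebra $\mathcal{A}$ is quasinilpotent if $\lim_{n\to\infty}\|a^n\|^{1/n}=0$. An element $a\in\mathcal{A}$ has a g-Drazin (generalized Drazin) inverse if there exists $x\in\mathcal{A}$ with $x=xax$, $ax=xa$, and $a-a^2x$ quasinilpotent; such $x$ is unique and is denoted $a^d$. *)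

From Stdlib Require Import Reals Lra.
Open Scope R_scope.

Definition Cx := (R * R)%type.
Definition C1 : Cx := (1, 0).
Definition Cadd (a b : Cx) : Cx := (fst a + fst b, snd a + snd b).
Definition Cmul (a b : Cx) : Cx :=
  (fst a * fst b - snd a * snd b, fst a * snd b + snd a * fst b).
Definition Copp (a : Cx) : Cx := (- fst a, - snd a).
Definition Cmod (a : Cx) : R := sqrt (fst a * fst a + snd a * snd a).

Record NormedSpace := mkNS {
  vcar :> Type;
  vzero : vcar;
  vadd : vcar -> vcar -> vcar;
  vscal : Cx -> vcar -> vcar;
  vnorm : vcar -> R;
  vaddA : forall x y z, vadd x (vadd y z) = vadd (vadd x y) z;
  vaddC : forall x y, vadd x y = vadd y x;
  vadd0 : forall x, vadd x vzero = x;
  vaddN : forall x, vadd x (vscal (Copp C1) x) = vzero;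
  vscal1 : forall x, vscal C1 x = x;
  vscalA : forall a b x, vscal a (vscal b x) = vscal (Cmul a b) x;
  vscalDr : forall a x y, vscal a (vadd x y) = vadd (vscal a x) (vscal a y);
  vscalDl : forall a b x, vscal (Cadd a b) x = vadd (vscal a x) (vscal b x);
  vnorm_ge0 : forall x, 0 <= vnorm x;
  vnorm_eq0 : forall x, vnorm x = 0 -> x = vzero;
  vnorm_scal : forall a x, vnorm (vscal a x) = Cmod a * vnorm x;
  vnorm_tri : forall x y, vnorm (vadd x y) <= vnorm x + vnorm y }.

Arguments vzero {n}.
Arguments vadd {n}.
Arguments vscal {n}.
Arguments vnorm {n}.

Definition vopp {X : NormedSpace} (x : X) : X := vscal (Copp C1) x.
Definition vsub {X : NormedSpace} (x y : X) : X := vadd x (vopp y).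

Definition complete (X : NormedSpace) : Prop :=
  forall u : nat -> X,
    (forall eps, 0 < eps -> exists N, forall n m, (N <= n)%nat -> (N <= m)%nat ->
        vnorm (vsub (u n) (u m)) < eps) ->
    exists l : X, forall eps, 0 < eps -> exists N, forall n, (N <= n)%nat ->
        vnorm (vsub (u n) l) < eps.

Section Prod.
Variables X Y : NormedSpace.
Let P := (X * Y)%type.
Let pzero : P := (vzero, vzero).
Let padd (p q : P) : P := (vadd (fst p) (fst q), vadd (snd p) (snd q)).
Let pscal (a : Cx) (p : P) : P := (vscal a (fst p), vscal a (snd p)).
Let pnorm (p : P) : R := vnorm (fst p) + vnorm (snd p).

Lemma paddA : forall x y z, padd x (padd y z) = padd (padd x y) z.
Proof. intros [] [] []; unfold padd; simpl; now rewrite !vaddA. Qed.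
Lemma paddC : forall x y, padd x y = padd y x.
Proof. intros [] []; unfold padd; simpl; f_equal; apply vaddC. Qed.
Lemma padd0 : forall x, padd x pzero = x.
Proof. intros []; unfold padd, pzero; simpl; now rewrite !vadd0. Qed.
Lemma paddN : forall x, padd x (pscal (Copp C1) x) = pzero.
Proof. intros []; unfold padd, pscal, pzero; simpl; now rewrite !vaddN. Qed.
Lemma pscal1 : forall x, pscal C1 x = x.
Proof. intros []; unfold pscal; simpl; now rewrite !vscal1. Qed.
Lemma pscalA : forall a b x, pscal a (pscal b x) = pscal (Cmul a b) x.
Proof. intros a b []; unfold pscal; simpl; now rewrite !vscalA. Qed.
Lemma pscalDr : forall a x y, pscal a (padd x y) = padd (pscal a x) (pscal a y).
Proof. intros a [] []; unfold pscal, padd; simpl; now rewrite !vscalDr. Qed.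
Lemma pscalDl : forall a b x, pscal (Cadd a b) x = padd (pscal a x) (pscal b x).
Proof. intros a b []; unfold pscal, padd; simpl; now rewrite !vscalDl. Qed.
Lemma pnorm_ge0 : forall x, 0 <= pnorm x.
Proof. intros [x y]; unfold pnorm; simpl.
  pose proof (vnorm_ge0 X x); pose proof (vnorm_ge0 Y y); lra. Qed.
Lemma pnorm_eq0 : forall x, pnorm x = 0 -> x = pzero.
Proof. intros [x y]; unfold pnorm, pzero; simpl; intro H.
  pose proof (vnorm_ge0 X x); pose proof (vnorm_ge0 Y y).
  rewrite (vnorm_eq0 X x), (vnorm_eq0 Y y); auto; lra. Qed.
Lemma pnorm_scal : forall a x, pnorm (pscal a x) = Cmod a * pnorm x.
Proof. intros a []; unfold pnorm, pscal; simpl; rewrite !vnorm_scal; ring. Qed.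
Lemma pnorm_tri : forall x y, pnorm (padd x y) <= pnorm x + pnorm y.
Proof. intros [x1 y1] [x2 y2]; unfold pnorm, padd; simpl.
  pose proof (vnorm_tri X x1 x2); pose proof (vnorm_tri Y y1 y2); lra. Qed.

Definition NSprod : NormedSpace :=
  mkNS P pzero padd pscal pnorm paddA paddC padd0 paddN pscal1 pscalA
       pscalDr pscalDl pnorm_ge0 pnorm_eq0 pnorm_scal pnorm_tri.
End Prod.

Record Op (X Y : NormedSpace) := mkOp {
  app :> X -> Y;
  op_add : forall x y, app (vadd x y) = vadd (app x) (app y);
  op_scal : forall a x, app (vscal a x) = vscal a (app x);
  op_bnd : exists K, forall x, vnorm (app x) <= K * vnorm x }.
Arguments app {X Y}.
Arguments op_add {X Y}.
Arguments op_scal {X Y}.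
Arguments op_bnd {X Y}.

Definition opeq {X Y : NormedSpace} (T S : Op X Y) : Prop := forall x, T x = S x.

Lemma op_bnd_pos {X Y : NormedSpace} (T : Op X Y) :
  exists K, 0 <= K /\ forall x, vnorm (T x) <= K * vnorm x.
Proof.
  destruct (op_bnd T) as [K HK]. exists (Rabs K); split; [apply Rabs_pos|].
  intro x. eapply Rle_trans; [apply HK|]. apply Rmult_le_compat_r;
  [apply vnorm_ge0 | apply Rle_abs].
Qed.

Lemma vswap4 {X : NormedSpace} (a b c d : X) :
  vadd (vadd a b) (vadd c d) = vadd (vadd a c) (vadd b d).
Proof.
  rewrite (vaddA X (vadd a b) c d), (vaddA X (vadd a c) b d). f_equal.
  rewrite <- (vaddA X a b c), <- (vaddA X a c b). f_equal. apply vaddC.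
Qed.

Lemma Cmul_comm (a b : Cx) : Cmul a b = Cmul b a.
Proof. destruct a, b; unfold Cmul; simpl; f_equal; ring. Qed.

Lemma vopp_add {X : NormedSpace} (x y : X) : vopp (vadd x y) = vadd (vopp x) (vopp y).
Proof. unfold vopp; apply vscalDr. Qed.

Lemma vopp_scal {X : NormedSpace} a (x : X) : vopp (vscal a x) = vscal a (vopp x).
Proof. unfold vopp; rewrite !vscalA; now rewrite Cmul_comm. Qed.

Lemma Cmod_m1 : Cmod (Copp C1) = 1.
Proof. unfold Cmod, Copp, C1; simpl.
  match goal with |- sqrt ?e = 1 => replace e with 1 by ring end.
  apply sqrt_1. Qed.

Lemma vnorm_opp {X : NormedSpace} (x : X) : vnorm (vopp x) = vnorm x.
Proof. unfold vopp; rewrite vnorm_scal, Cmod_m1; ring. Qed.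

Section Ops.
Context {X Y Z : NormedSpace}.

Definition opcomp (T : Op Y Z) (S : Op X Y) : Op X Z.
Proof.
  refine (mkOp X Z (fun x => T (S x)) _ _ _).
  - intros x y; now rewrite op_add, op_add.
  - intros a x; now rewrite op_scal, op_scal.
  - destruct (op_bnd_pos T) as [KT [HT0 HT]], (op_bnd_pos S) as [KS [HS0 HS]].
    exists (KT * KS); intro x. eapply Rle_trans; [apply HT|].
    rewrite Rmult_assoc. apply Rmult_le_compat_l; auto.
Defined.

Definition opsub (T S : Op X Y) : Op X Y.
Proof.
  refine (mkOp X Y (fun x => vsub (T x) (S x)) _ _ _).
  - intros x y; unfold vsub; now rewrite !op_add, vopp_add, vswap4.
  - intros a x; unfold vsub; now rewrite !op_scal, vopp_scal, vscalDr.
  - destruct (op_bnd_pos T) as [KT [HT0 HT]], (op_bnd_pos S) as [KS [HS0 HS]].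
    exists (KT + KS); intro x. unfold vsub. eapply Rle_trans; [apply vnorm_tri|].
    rewrite vnorm_opp. pose proof (HT x); pose proof (HS x). lra.
Defined.
End Ops.

Definition opid (X : NormedSpace) : Op X X.
Proof.
  refine (mkOp X X (fun x => x) _ _ _); try reflexivity.
  exists 1; intro x; lra.
Defined.

Definition oppow {X : NormedSpace} (T : Op X X) (n : nat) : Op X X :=
  Nat.iter n (opcomp T) (opid X).

Definition opball {X Y : NormedSpace} (T : Op X Y) (r : R) : Prop :=
  exists x, vnorm x <= 1 /\ r = vnorm (T x).

Lemma opball_bound {X Y : NormedSpace} (T : Op X Y) : bound (opball T).
Proof.
  destruct (op_bnd_pos T) as [K [HK0 HK]]. exists K. intros r [x [Hx ->]].
  eapply Rle_trans; [apply HK|]. rewrite <- (Rmult_1_r K) at 2.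
  apply Rmult_le_compat_l; auto.
Qed.

Lemma opball_ne {X Y : NormedSpace} (T : Op X Y) : exists r, opball T r.
Proof.
  exists (vnorm (T vzero)), vzero; split; auto.
  (* ||0|| = ||(-1+1) ... ||: use 0 = x + (-1)x with x = 0 *)
  assert (H : vnorm (@vzero X) = 0).
  { assert (E : @vzero X = vscal (Cadd C1 (Copp C1)) vzero).
    { rewrite vscalDl, vscal1. now rewrite vaddN. }
    rewrite E at 1. rewrite vnorm_scal.
    replace (Cmod (Cadd C1 (Copp C1))) with 0. ring.
    unfold Cmod, Cadd, C1, Copp; simpl.
    match goal with |- _ = sqrt ?e => replace e with 0 by ring end.
    symmetry; apply sqrt_0. }
  rewrite H; lra.
Qed.

Definition opnorm {X Y : NormedSpace} (T : Op X Y) : R :=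
  proj1_sig (completeness (opball T) (opball_bound T) (opball_ne T)).

Definition root_n (r : R) (n : nat) : R :=
  if Rle_dec r 0 then 0 else Rpower r (/ INR n).

Definition quasinilpotent {X : NormedSpace} (T : Op X X) : Prop :=
  Un_cv (fun n => root_n (opnorm (oppow T n)) n) 0.

Definition has_gDrazin {X : NormedSpace} (a : Op X X) : Prop :=
  exists x : Op X X,
    opeq x (opcomp x (opcomp a x)) /\
    opeq (opcomp a x) (opcomp x a) /\
    quasinilpotent (opsub a (opcomp (opcomp a a) x)).

Definition opmatrix {X Y : NormedSpace} (A : Op X X) (B : Op Y X)
  (C : Op X Y) (D : Op Y Y) : Op (NSprod X Y) (NSprod X Y).
Proof.
  refine (mkOp (NSprod X Y) (NSprod X Y)
    (fun p => (vadd (A (fst p)) (B (snd p)), vadd (C (fst p)) (D (snd p)))) _ _ _).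
  - intros [x1 y1] [x2 y2]; simpl. rewrite !op_add; f_equal; apply vswap4.
  - intros a [x y]; simpl. now rewrite !op_scal, !vscalDr.
  - destruct (op_bnd_pos A) as [KA [HA0 HA]], (op_bnd_pos B) as [KB [HB0 HB]],
      (op_bnd_pos C) as [KC [HC0 HC]], (op_bnd_pos D) as [KD [HD0 HD]].
    exists (KA + KB + KC + KD); intros [x y]; simpl.
    pose proof (vnorm_tri X (A x) (B y)); pose proof (vnorm_tri Y (C x) (D y)).
    pose proof (HA x); pose proof (HB y); pose proof (HC x); pose proof (HD y).
    pose proof (vnorm_ge0 X x); pose proof (vnorm_ge0 Y y).
    revert H1 H3 H5 H2 H4 H6.
    generalize (vnorm x) as nx; generalize (vnorm y) as ny; intros.
    assert (KA * nx + KC * nx <= (KA + KB + KC + KD) * nx).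
    { rewrite <- Rmult_plus_distr_r. apply Rmult_le_compat_r; lra. }
    assert (KB * ny + KD * ny <= (KA + KB + KC + KD) * ny).
    { rewrite <- Rmult_plus_distr_r. apply Rmult_le_compat_r; lra. }
    rewrite Rmult_plus_distr_l. lra.
Defined.

(* Let M = [A B; C D] with A, D g-Drazin invertible and ABC = ABD = DCB = CBCB = 0.
   Then M^2 = [A^2+BC, AB+BD; CA+DC, CB+D^2] is the sum
     ((N_AB + E_A2) + N_CA) + (N_DC + (E_D2 + N_BD)) + diag(BC, CB)
   of block operators (N_* having a single off-diagonal block, E_A2 = diag(A^2,0),
   E_D2 = diag(0,D^2)), and at each addition P + Q of this bracketing PQ = 0.
   The proof rests on three general facts about g-Drazin inverses in L(Z):
   (1) lower triangular matrices [A 0; C D] with g-Drazin invertible A, D are g-Drazin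
       invertible; the corner of the inverse is the sum of two geometric series solving a
       Sylvester equation, which is where completeness of the target space is used;
   (2) if P, Q are g-Drazin invertible and PQ = 0 then so is P + Q: writing P + Q = G H with
       H G = [P 0; I Q], this follows from (1) and Cline's formula (HG invertible => GH is);
   (3) T is g-Drazin invertible iff T^2 is; the hard direction uses that the spectral
       idempotent of T^2 commutes with T.
   The off-diagonal summands and diag(BC, CB) are nilpotent, the diagonal ones are squares of
   triangular g-Drazin invertible matrices, so (2) gives M^2 and (3) gives M. *)

From Stdlib Require Import Reals Lra Lia ZArith List ClassicalEpsilon.
Open Scope R_scope.

Section Vec.
Context {X : NormedSpace}.
Implicit Types x y z : X.

Lemma v0add x : vadd vzero x = x.
Proof. rewrite vaddC; apply vadd0. Qed.

Lemma vaddNl x : vadd (vopp x) x = vzero.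
Proof. rewrite vaddC; apply vaddN. Qed.

Lemma vadd_cancel_l x y z : vadd x y = vadd x z -> y = z.
Proof.
  intro H. assert (E : vadd (vopp x) (vadd x y) = vadd (vopp x) (vadd x z)) by now rewrite H.
  rewrite !vaddA, vaddNl, !v0add in E. exact E.
Qed.

Lemma vscal_zero a : vscal a (@vzero X) = vzero.
Proof.
  apply (vadd_cancel_l (vscal a vzero)). rewrite <- vscalDr, !vadd0. reflexivity.
Qed.

Lemma vscal_0 x : vscal (0,0) x = vzero.
Proof.
  apply (vadd_cancel_l (vscal (0,0) x)). rewrite <- vscalDl, vadd0.
  f_equal. unfold Cadd; simpl. f_equal; ring.
Qed.

Lemma vnorm_zero : vnorm (@vzero X) = 0.
Proof.
  rewrite <- (vscal_0 vzero), vnorm_scal. unfold Cmod; simpl.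
  replace (0*0+0*0) with 0 by ring. rewrite sqrt_0. ring.
Qed.

Lemma vopp_opp x : vopp (vopp x) = x.
Proof.
  unfold vopp. rewrite vscalA.
  replace (Cmul (Copp C1) (Copp C1)) with C1 by (unfold Cmul, Copp, C1; simpl; f_equal; ring).
  apply vscal1.
Qed.

Lemma vopp_zero : vopp (@vzero X) = vzero.
Proof. unfold vopp; apply vscal_zero. Qed.

Lemma vnorm_sub_sym x y : vnorm (vsub x y) = vnorm (vsub y x).
Proof.
  unfold vsub. rewrite <- (vnorm_opp (vadd x (vopp y))), vopp_add, vopp_opp, vaddC.
  reflexivity.
Qed.

Lemma vnorm_sub_eq0 x y : vnorm (vsub x y) = 0 -> x = y.
Proof.
  intro H. apply vnorm_eq0 in H. unfold vsub in H.
  assert (E : vadd (vadd x (vopp y)) y = vadd vzero y) by now rewrite H.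
  rewrite <- vaddA, vaddNl, vadd0, v0add in E. exact E.
Qed.
End Vec.

Section OpLin.
Context {X Y : NormedSpace}.
Lemma op_zero (T : Op X Y) : T vzero = vzero.
Proof.
  apply (vadd_cancel_l (T vzero)). rewrite <- op_add, !vadd0. reflexivity.
Qed.
Lemma op_opp (T : Op X Y) x : T (vopp x) = vopp (T x).
Proof. unfold vopp; apply op_scal. Qed.
Lemma op_sub (T : Op X Y) x y : T (vsub x y) = vsub (T x) (T y).
Proof. unfold vsub; now rewrite op_add, op_opp. Qed.
End OpLin.

(* A reflexive normalizer for identities in the abelian group (X, vadd, vopp):
   both sides are reified into [gx] terms over a list of atoms and compared through
   their integer coefficient vectors [gco]. *)
Inductive gx := GAt (n : nat) | G0 | GAdd (a b : gx) | GOpp (a : gx).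

Section GroupNormalizer.
Context {X : NormedSpace}.

Fixpoint gden (env : list X) (e : gx) : X :=
  match e with
  | GAt n => nth n env vzero
  | G0 => vzero
  | GAdd a b => vadd (gden env a) (gden env b)
  | GOpp a => vopp (gden env a)
  end.

Fixpoint gco (e : gx) (n : nat) : Z :=
  match e with
  | GAt m => if Nat.eqb m n then 1%Z else 0%Z
  | G0 => 0%Z
  | GAdd a b => (gco a n + gco b n)%Z
  | GOpp a => (- gco a n)%Z
  end.

Fixpoint lin (env : list X) (k : nat) (f : nat -> Z) : X :=
  match env with
  | nil => vzero
  | x :: r => vadd (vscal (IZR (f k), 0) x) (lin r (S k) f)
  end.

Lemma lin_add env k f g :
  lin env k (fun n => (f n + g n)%Z) = vadd (lin env k f) (lin env k g).
Proof.
  revert k; induction env as [|x r IH]; intro k; simpl.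
  - now rewrite vadd0.
  - rewrite IH, vswap4. f_equal. rewrite <- vscalDl. f_equal. unfold Cadd; simpl.
    rewrite plus_IZR. f_equal; ring.
Qed.

Lemma lin_opp env k f : lin env k (fun n => (- f n)%Z) = vopp (lin env k f).
Proof.
  revert k; induction env as [|x r IH]; intro k; simpl.
  - now rewrite vopp_zero.
  - rewrite IH, vopp_add. f_equal. unfold vopp; rewrite vscalA. f_equal.
    unfold Cmul, Copp, C1; simpl. rewrite opp_IZR. f_equal; ring.
Qed.

Lemma lin_zero env k f : (forall n, f n = 0%Z) -> lin env k f = vzero.
Proof.
  revert k; induction env as [|x r IH]; intro k; simpl; intros H; auto.
  rewrite H, IH, vadd0; auto. apply vscal_0.
Qed.

Lemma lin_ext env k f g :
  (forall n, (k <= n)%nat -> (n < k + length env)%nat -> f n = g n) ->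
  lin env k f = lin env k g.
Proof.
  revert k; induction env as [|x r IH]; intros k H; simpl; auto.
  rewrite H by (simpl; lia). f_equal. apply IH. intros n H1 H2; apply H; simpl in *; lia.
Qed.

Lemma lin_at env k m : lin env k (fun n => if Nat.eqb m n then 1%Z else 0%Z) =
   if Nat.leb k m then nth (m - k) env vzero else vzero.
Proof.
  revert k; induction env as [|x r IH]; intro k; simpl.
  - destruct (Nat.leb k m); auto. destruct (m - k)%nat; auto.
  - rewrite IH. destruct (Nat.eqb_spec m k).
    + subst. rewrite Nat.leb_refl. replace (k - k)%nat with 0%nat by lia.
      replace (Nat.leb (S k) k) with false by (symmetry; apply Nat.leb_gt; lia).
      rewrite vadd0. apply vscal1.
    + rewrite vscal_0, v0add.
      destruct (Nat.leb_spec k m); destruct (Nat.leb_spec (S k) m); try lia; auto.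
      replace (m - k)%nat with (S (m - S k)) by lia. reflexivity.
Qed.

Lemma gden_lin env e : gden env e = lin env 0 (gco e).
Proof.
  induction e; simpl.
  - rewrite lin_at. simpl. now rewrite Nat.sub_0_r.
  - symmetry; now apply lin_zero.
  - rewrite IHe1, IHe2. now rewrite <- lin_add.
  - rewrite IHe. now rewrite <- lin_opp.
Qed.

Lemma gnorm_ok env e1 e2 :
  forallb (fun n => Z.eqb (gco e1 n) (gco e2 n)) (seq 0 (length env)) = true ->
  gden env e1 = gden env e2.
Proof.
  intro H. rewrite !gden_lin. apply lin_ext. intros n _ Hn.
  rewrite forallb_forall in H. apply Z.eqb_eq, H. apply in_seq. lia.
Qed.
End GroupNormalizer.

Ltac ginsert t env :=
  lazymatch env with
  | nil => constr:(t :: nil)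
  | ?x :: ?r =>
      lazymatch x with t => env | _ => let r' := ginsert t r in constr:(x :: r') end
  end.
Ltac gatoms t env :=
  lazymatch t with
  | vadd ?a ?b => let e := gatoms a env in gatoms b e
  | vsub ?a ?b => let e := gatoms a env in gatoms b e
  | vopp ?a => gatoms a env
  | vzero => env
  | _ => ginsert t env
  end.
Ltac gidx t env :=
  lazymatch env with
  | ?x :: ?r =>
      lazymatch x with t => constr:(0%nat) | _ => let i := gidx t r in constr:(S i) end
  end.
Ltac greify t env :=
  lazymatch t with
  | vadd ?a ?b => let x := greify a env in let y := greify b env in constr:(GAdd x y)
  | vsub ?a ?b => let x := greify a env in let y := greify b env in constr:(GAdd x (GOpp y))
  | vopp ?a => let x := greify a env in constr:(GOpp x)
  | vzero => constr:(G0)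
  | _ => let i := gidx t env in constr:(GAt i)
  end.

Ltac fold_opp :=
  repeat match goal with
  | |- context [vscal (Copp C1) ?t] => change (vscal (Copp C1) t) with (vopp t)
  end.

(* [group_eq] proves goals [l = r] that hold in every abelian group. *)
Ltac group_eq :=
  fold_opp;
  lazymatch goal with
  | |- @eq (vcar ?X) ?l ?r =>
    let env0 := gatoms l (@nil (vcar X)) in
    let env := gatoms r env0 in
    let el := greify l env in
    let er := greify r env in
    change (gden env el = gden env er);
    apply gnorm_ok; vm_compute; reflexivity
  end.

Ltac push1 :=
  match goal with
  | |- context [app ?T (vsub ?x ?y)] => rewrite (op_sub T x y)
  | |- context [app ?T (vadd ?x ?y)] => rewrite (op_add T x y)
  | |- context [app ?T (vopp ?x)] => rewrite (op_opp T x)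
  | |- context [app ?T vzero] => rewrite (op_zero T)
  end.
Ltac push := repeat push1.

Section MoreOps.
Context {X Y : NormedSpace}.

Definition opadd (T S : Op X Y) : Op X Y.
Proof.
  refine (mkOp X Y (fun x => vadd (T x) (S x)) _ _ _).
  - intros x y; rewrite !op_add. apply vswap4.
  - intros a x; now rewrite !op_scal, vscalDr.
  - destruct (op_bnd_pos T) as [KT [HT0 HT]], (op_bnd_pos S) as [KS [HS0 HS]].
    exists (KT + KS); intro x. eapply Rle_trans; [apply vnorm_tri|].
    pose proof (HT x); pose proof (HS x). lra.
Defined.

Definition opzero : Op X Y.
Proof.
  refine (mkOp X Y (fun _ => vzero) _ _ _).
  - intros; now rewrite vadd0.
  - intros; now rewrite vscal_zero.
  - exists 0; intro x. rewrite vnorm_zero. lra.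
Defined.
End MoreOps.

Lemma oppow_S {X : NormedSpace} (T : Op X X) n x : oppow T (S n) x = T (oppow T n x).
Proof. reflexivity. Qed.
Lemma oppow_0 {X : NormedSpace} (T : Op X X) x : oppow T 0 x = x.
Proof. reflexivity. Qed.
Lemma oppow_Sr {X : NormedSpace} (T : Op X X) n x : oppow T (S n) x = oppow T n (T x).
Proof. induction n; simpl; auto. rewrite <- IHn. reflexivity. Qed.

Lemma oppow_ext {X : NormedSpace} (T S : Op X X) :
  opeq T S -> forall n v, oppow T n v = oppow S n v.
Proof. intros H n; induction n; intro v; simpl; auto. rewrite IHn. apply H. Qed.

Lemma oppow_sq {X : NormedSpace} (T : Op X X) n v :
  oppow (opcomp T T) n v = oppow T (2 * n) v.
Proof.
  induction n; simpl; auto. rewrite IHn.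
  replace (n + S (n + 0))%nat with (S (n + (n + 0))) by lia. reflexivity.
Qed.

Lemma pow_bound {X : NormedSpace} (T : Op X X) k :
  0 <= k -> (forall x, vnorm (T x) <= k * vnorm x) ->
  forall n x, vnorm (oppow T n x) <= k ^ n * vnorm x.
Proof.
  intros Hk H n; induction n; intro x.
  - simpl; lra.
  - rewrite oppow_S. eapply Rle_trans; [apply H|]. simpl.
    rewrite Rmult_assoc. apply Rmult_le_compat_l; auto.
Qed.

Lemma Cmod_real r : Cmod (r, 0) = Rabs r.
Proof. unfold Cmod; simpl. rewrite <- sqrt_Rsqr_abs. unfold Rsqr. f_equal; ring. Qed.

Section Norms.
Context {X Y : NormedSpace}.

Lemma opnorm_lub (T : Op X Y) : is_lub (opball T) (opnorm T).
Proof. unfold opnorm. destruct completeness as [l Hl]. exact Hl. Qed.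

Lemma opnorm_ub (T : Op X Y) x : vnorm x <= 1 -> vnorm (T x) <= opnorm T.
Proof. intro H. apply (proj1 (opnorm_lub T)). exists x; auto. Qed.

Lemma opnorm_le (T : Op X Y) K :
  0 <= K -> (forall x, vnorm (T x) <= K * vnorm x) -> opnorm T <= K.
Proof.
  intros HK H. apply (proj2 (opnorm_lub T)). intros r [x [Hx ->]].
  eapply Rle_trans; [apply H|]. rewrite <- (Rmult_1_r K) at 2.
  apply Rmult_le_compat_l; auto.
Qed.

Lemma opnorm_bound (T : Op X Y) x : vnorm (T x) <= opnorm T * vnorm x.
Proof.
  destruct (Req_dec (vnorm x) 0) as [H0|H0].
  - apply vnorm_eq0 in H0. subst. rewrite op_zero, !vnorm_zero. lra.
  - assert (Hp : 0 < vnorm x) by (pose proof (vnorm_ge0 _ x); lra).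
    assert (Hi : 0 <= / vnorm x) by (left; apply Rinv_0_lt_compat; auto).
    set (x' := vscal (/ vnorm x, 0) x).
    assert (Hx' : vnorm x' = 1).
    { unfold x'. rewrite vnorm_scal, Cmod_real, Rabs_right by lra. field; lra. }
    pose proof (opnorm_ub T x' (Req_le _ _ Hx')) as H1.
    unfold x' in H1. rewrite op_scal, vnorm_scal, Cmod_real, Rabs_right in H1 by lra.
    apply Rmult_le_compat_l with (r := vnorm x) in H1; [|lra].
    rewrite <- Rmult_assoc, Rinv_r, Rmult_1_l in H1 by lra. lra.
Qed.
End Norms.

(** * Quasinilpotence as a uniform geometric bound *)

Ltac nneg := repeat (match goal with
  | |- 0 <= _ ^ _ => apply pow_le
  | |- 0 <= _ * _ => apply Rmult_le_pos
  | |- 0 <= _ / _ => unfold Rdiv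
  | |- 0 <= / _ => left; apply Rinv_0_lt_compat
  end); auto; try lra.


Definition qnil {X : NormedSpace} (T : Op X X) : Prop :=
  forall eps, 0 < eps -> exists K, forall n x, vnorm (oppow T n x) <= K * eps ^ n * vnorm x.

Lemma qnil_pos {X : NormedSpace} (T : Op X X) eps : qnil T -> 0 < eps ->
  exists K, 0 <= K /\ forall n x, vnorm (oppow T n x) <= K * eps ^ n * vnorm x.
Proof.
  intros Hq He. destruct (Hq eps He) as [K HK]. exists (Rmax K 0). split; [apply Rmax_r|].
  intros n w. eapply Rle_trans; [apply HK|]. apply Rmult_le_compat_r; [apply vnorm_ge0|].
  apply Rmult_le_compat_r; [apply pow_le; lra|apply Rmax_l].
Qed.

Lemma qnil_eventually {X : NormedSpace} (T : Op X X) :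
  (forall eps, 0 < eps -> exists K N, forall n x, (N <= n)%nat ->
      vnorm (oppow T n x) <= K * eps ^ n * vnorm x) -> qnil T.
Proof.
  intros H eps He. destruct (H eps He) as [K [N HN]].
  destruct (op_bnd_pos T) as [k [Hk0 Hk]].
  set (c := Rmax k eps).
  assert (Hc : eps <= c) by apply Rmax_r.
  assert (Hkc : k <= c) by apply Rmax_l.
  assert (Hce : 1 <= c / eps).
  { apply (Rmult_le_reg_r eps); [lra|]. unfold Rdiv. rewrite Rmult_assoc, Rinv_l; lra. }
  exists (Rmax K ((c / eps) ^ N)). intros n x.
  pose proof (vnorm_ge0 _ x).
  destruct (le_lt_dec N n) as [Hn|Hn].
  - eapply Rle_trans; [apply HN; auto|].
    apply Rmult_le_compat_r; auto. apply Rmult_le_compat_r; [apply pow_le; lra|].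
    apply Rmax_l.
  - eapply Rle_trans; [apply (pow_bound T k); auto|].
    apply Rmult_le_compat_r; auto.
    apply Rle_trans with (c ^ n); [apply pow_incr; lra|].
    replace (c ^ n) with ((c / eps) ^ n * eps ^ n)
      by (rewrite <- Rpow_mult_distr; f_equal; field; lra).
    apply Rmult_le_compat_r; [apply pow_le; lra|].
    eapply Rle_trans; [|apply Rmax_r]. apply Rle_pow; auto. lia.
Qed.

Lemma Rpower_pos x y : 0 < Rpower x y.
Proof. unfold Rpower; apply exp_pos. Qed.

Lemma Rpower_inv_n r n : 0 < r -> (0 < n)%nat -> Rpower (Rpower r (/ INR n)) (INR n) = r.
Proof.
  intros Hr Hn. rewrite Rpower_mult, Rinv_l; [apply Rpower_1; auto|].
  apply not_0_INR; lia.
Qed.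

Lemma INR_lt_pow2 n : INR n < 2 ^ n.
Proof.
  induction n; [simpl; lra|]. rewrite S_INR. change (2 ^ S n) with (2 * 2 ^ n).
  assert (1 <= 2 ^ n) by (apply pow_R1_Rle; lra). lra.
Qed.

(* From the n-th root condition, ||T^n|| <= eps^n for large n. *)
Lemma qnil_of_quasinilpotent {X : NormedSpace} (T : Op X X) : quasinilpotent T -> qnil T.
Proof.
  intros Hq. apply qnil_eventually. intros eps He.
  destruct (Hq eps He) as [N HN]. exists 1, (max N 1). intros n x Hn.
  specialize (HN n ltac:(lia)). unfold R_dist in HN. rewrite Rminus_0_r in HN.
  set (r := opnorm (oppow T n)) in *.
  assert (Hr : r <= eps ^ n).
  { unfold root_n in HN. destruct (Rle_dec r 0) as [H0|H0].
    - pose proof (pow_le eps n); lra.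
    - apply Rnot_le_lt in H0.
      pose proof (Rpower_pos r (/ INR n)).
      rewrite Rabs_right in HN by lra.
      rewrite <- (Rpower_inv_n r n) by (auto; lia).
      rewrite <- Rpower_pow by lra.
      apply Rlt_le, Rlt_Rpower_l; [apply lt_0_INR; lia | lra]. }
  eapply Rle_trans; [apply opnorm_bound|]. fold r.
  rewrite Rmult_1_l. apply Rmult_le_compat_r; auto. apply vnorm_ge0.
Qed.

(* K^(1/n) < 2 for n > K: used to absorb the constant of [qnil] into the n-th root. *)
Lemma Rpower_inv_lt_2 K N n : 1 <= K -> K < INR N -> (N < n)%nat -> Rpower K (/ INR n) < 2.
Proof.
  intros HK HN Hn.
  destruct (Rlt_le_dec (Rpower K (/ INR n)) 2) as [h|h]; auto. exfalso.
  assert (Rpower 2 (INR n) <= Rpower (Rpower K (/ INR n)) (INR n))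
    by (apply Rle_Rpower_l; [apply pos_INR | lra]).
  rewrite Rpower_inv_n, Rpower_pow in H by (lra || lia).
  pose proof (INR_lt_pow2 n). assert (INR N <= INR n) by (apply le_INR; lia). lra.
Qed.

(* Conversely ||T^n||^(1/n) <= K^(1/n) eps/2 < eps for large n. *)
Lemma quasinilpotent_of_qnil {X : NormedSpace} (T : Op X X) : qnil T -> quasinilpotent T.
Proof.
  intros Hq eps He. destruct (Hq (eps / 2)) as [K HK]; [lra|].
  set (K1 := Rmax K 1).
  assert (HK1 : 1 <= K1) by apply Rmax_r.
  destruct (INR_archimed 1 K1) as [N HN]; [lra|]. rewrite Rmult_1_r in HN.
  exists (S N). intros n Hn. unfold R_dist. rewrite Rminus_0_r.
  set (r := opnorm (oppow T n)).
  assert (Hr : r <= K1 * (eps/2) ^ n).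
  { apply opnorm_le; [apply Rmult_le_pos; [lra|apply pow_le; lra]|].
    intro x. eapply Rle_trans; [apply HK|]. apply Rmult_le_compat_r; [apply vnorm_ge0|].
    apply Rmult_le_compat_r; [apply pow_le; lra|apply Rmax_l]. }
  unfold root_n. destruct (Rle_dec r 0) as [H0|H0]; [rewrite Rabs_R0; lra|].
  apply Rnot_le_lt in H0. pose proof (Rpower_pos r (/ INR n)).
  rewrite Rabs_right by lra.
  assert (Hn0 : 0 < INR n) by (apply lt_0_INR; lia).
  assert (Hpn : 0 < (eps/2)^n) by (apply pow_lt; lra).
  apply Rle_lt_trans with (Rpower (K1 * (eps/2)^n) (/ INR n)).
  { apply Rle_Rpower_l; auto. left; apply Rinv_0_lt_compat; auto. }
  rewrite <- Rpower_mult_distr, <- Rpower_pow, Rpower_mult, Rinv_r, Rpower_1 by lra.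
  pose proof (Rpower_inv_lt_2 K1 N n HK1 HN ltac:(lia)). nra.
Qed.

(* [has_gDrazin] with quasinilpotence replaced by [qnil]; the two are equivalent. *)
Definition gdrazin {X : NormedSpace} (a : Op X X) : Prop :=
  exists x : Op X X,
    opeq x (opcomp x (opcomp a x)) /\
    opeq (opcomp a x) (opcomp x a) /\
    qnil (opsub a (opcomp (opcomp a a) x)).

Lemma has_gDrazin_iff {X : NormedSpace} (a : Op X X) : has_gDrazin a <-> gdrazin a.
Proof.
  split; intros [x [H1 [H2 H3]]]; exists x; (split; [|split]); auto.
  - apply qnil_of_quasinilpotent; auto.
  - apply quasinilpotent_of_qnil; auto.
Qed.

Lemma qnil_ext {X : NormedSpace} (T S : Op X X) : opeq T S -> qnil T -> qnil S.
Proof.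
  intros H Hq e He. destruct (Hq e He) as [K HK]. exists K; intros n v.
  rewrite <- (oppow_ext T S H). apply HK.
Qed.

Lemma gdrazin_ext {X : NormedSpace} (a b : Op X X) : opeq a b -> gdrazin a -> gdrazin b.
Proof.
  intros H [x [H1 [H2 H3]]]. exists x; split; [|split].
  - intro v. simpl. rewrite <- H. apply H1.
  - intro v. simpl. rewrite <- !H. apply H2.
  - eapply qnil_ext; [|exact H3]. intro v. simpl. rewrite !H. reflexivity.
Qed.

Lemma qnil_nilpotent {X : NormedSpace} (T : Op X X) k :
  (forall v, oppow T k v = vzero) -> qnil T.
Proof.
  intro H. apply qnil_eventually. intros e He. exists 0, k. intros n v Hn.
  replace n with ((n - k) + k)%nat by lia.
  assert (E : forall m, oppow T (m + k) v = vzero).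
  { induction m; simpl; auto. rewrite IHm. apply op_zero. }
  rewrite E, vnorm_zero. lra.
Qed.

Lemma gdrazin_nilpotent {X : NormedSpace} (T : Op X X) k :
  (forall v, oppow T k v = vzero) -> gdrazin T.
Proof.
  intro H. exists opzero. split; [|split].
  - intro v; reflexivity.
  - intro v; simpl. apply op_zero.
  - eapply qnil_ext; [|apply (qnil_nilpotent T k H)]. intro v; simpl.
    rewrite !op_zero. unfold vsub. rewrite vopp_zero, vadd0. reflexivity.
Qed.

(* Quasinilpotence passes to and from squares; for the converse, odd powers cost one
   factor ||T||. *)
Lemma qnil_square {X : NormedSpace} (T : Op X X) : qnil T -> qnil (opcomp T T).
Proof.
  intros H e He. destruct (qnil_pos T (Rmin e 1) H) as [K [HK0 HK]].
  { apply Rmin_glb_lt; lra. }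
  exists K. intros n v. rewrite oppow_sq. eapply Rle_trans; [apply HK|].
  pose proof (vnorm_ge0 _ v). apply Rmult_le_compat_r; auto.
  apply Rmult_le_compat_l; auto. rewrite pow_mult.
  assert (Hm1 : Rmin e 1 <= 1) by apply Rmin_r.
  assert (Hme : Rmin e 1 <= e) by apply Rmin_l.
  assert (Hm0 : 0 < Rmin e 1) by (apply Rmin_glb_lt; lra).
  apply pow_incr. split; [apply pow_le; lra|]. simpl. nra.
Qed.

Lemma qnil_of_square {X : NormedSpace} (T : Op X X) : qnil (opcomp T T) -> qnil T.
Proof.
  intros H e He. destruct (qnil_pos _ (e * e) H) as [K [HK0 HK]]; [nra|].
  destruct (op_bnd_pos T) as [k [Hk0 Hk]].
  exists (K + K * k / e). intros n v.
  pose proof (vnorm_ge0 _ v) as Hv.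
  assert (Hke : 0 <= K * k / e)
    by (unfold Rdiv; apply Rmult_le_pos; [nra|left; apply Rinv_0_lt_compat; lra]).
  destruct (Nat.Even_or_Odd n) as [[m ->]|[m ->]].
  - rewrite <- oppow_sq. eapply Rle_trans; [apply HK|].
    rewrite pow_mult. replace (e ^ 2) with (e * e) by ring.
    assert (0 <= (e*e)^m) by (apply pow_le; nra).
    assert (0 <= K * k / e * (e * e) ^ m * vnorm v) by nneg.
    nra.
  - replace (2 * m + 1)%nat with (S (2 * m)) by lia. rewrite oppow_S.
    eapply Rle_trans; [apply Hk|]. rewrite <- oppow_sq.
    replace (e ^ S (2 * m)) with (e * (e * e) ^ m)
      by (change (e ^ S (2 * m)) with (e * e ^ (2 * m)); rewrite pow_mult; do 2 f_equal; ring).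
    assert (Hm : 0 < (e*e)^m) by (apply pow_lt; nra).
    assert (k * vnorm (oppow (opcomp T T) m v) <= k * (K * (e*e) ^ m * vnorm v))
      by (apply Rmult_le_compat_l; auto).
    assert (K * k / e * (e * (e * e) ^ m) = K * k * (e*e)^m) by (field; lra).
    assert (0 <= K * (e * (e * e) ^ m) * vnorm v) by nneg.
    nra.
Qed.

Lemma qnil_factor {Z W : NormedSpace} (T : Op Z Z) (q : Op W W) (G : Op W Z) (F : Op Z W) :
  qnil q -> (forall n v, oppow T (S n) v = G (oppow q n (F v))) -> qnil T.
Proof.
  intros Hq H. apply qnil_eventually. intros e He.
  destruct (qnil_pos q e Hq He) as [K [HK0 HK]].
  destruct (op_bnd_pos G) as [kG [HG0 HG]], (op_bnd_pos F) as [kF [HF0 HF]].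
  exists (kG * K * kF / e), 1%nat. intros n v Hn.
  destruct n as [|n]; [lia|]. rewrite H.
  pose proof (vnorm_ge0 _ v).
  assert (Hpe : 0 < e ^ n) by (apply pow_lt; lra).
  eapply Rle_trans; [apply HG|].
  replace (kG * K * kF / e * e ^ S n * vnorm v) with
    (kG * (K * e ^ n * (kF * vnorm v))) by (simpl; field; lra).
  apply Rmult_le_compat_l; auto. eapply Rle_trans; [apply HK|].
  apply Rmult_le_compat_l; [nra|]. apply HF.
Qed.

Lemma vanish {X : NormedSpace} (v : X) C : (forall n, vnorm v <= C * (/2) ^ n) -> v = vzero.
Proof.
  intro H. apply vnorm_eq0. pose proof (vnorm_ge0 _ v).
  destruct (Req_dec (vnorm v) 0) as [E|E]; auto. exfalso.
  assert (Hp : 0 < vnorm v) by lra.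
  assert (HC : 0 < C) by (specialize (H 0%nat); simpl in H; lra).
  destruct (pow_lt_1_zero (/2)) with (y := vnorm v / C) as [N HN].
  { rewrite Rabs_right; lra. }
  { apply Rdiv_lt_0_compat; auto. }
  specialize (HN N (le_n N)). specialize (H N).
  rewrite Rabs_right in HN by (apply Rle_ge, pow_le; lra).
  apply (Rmult_lt_compat_l C) in HN; auto.
  replace (C * (vnorm v / C)) with (vnorm v) in HN by (field; lra). lra.
Qed.

(* Choosing eps = 1/(2(k+1)) in [qnil] beats growth k^n by a factor 2^-n. *)
Lemma half_pow k n : 0 <= k -> (k * / (2 * (k + 1))) ^ n <= (/2) ^ n.
Proof.
  intro Hk. apply pow_incr. split.
  - apply Rmult_le_pos; auto. left; apply Rinv_0_lt_compat; lra.
  - replace (k * / (2 * (k+1))) with (/2 * (k / (k+1))) by (field; lra).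
    rewrite <- (Rmult_1_r (/2)) at 2. apply Rmult_le_compat_l; [lra|].
    unfold Rdiv. apply (Rmult_le_reg_r (k+1)); [lra|]. rewrite Rmult_assoc, Rinv_l by lra. lra.
Qed.

Lemma half_pow_S k n : 0 <= k -> (k * / (2 * (k + 1))) ^ S n <= (/2) ^ n.
Proof.
  intro Hk. eapply Rle_trans; [apply half_pow; auto|].
  simpl. pose proof (pow_le (/2) n ltac:(lra)). lra.
Qed.

(** * The spectral idempotent of a g-Drazin invertible operator *)

(* The key fact is that every c commuting with b commutes with e, hence with z. *)
Section SpectralIdempotent.
Context {Z : NormedSpace} (b z : Op Z Z).
Hypothesis Hz1 : forall v, z v = z (b (z v)).
Hypothesis Hz2 : forall v, b (z v) = z (b v).
Hypothesis Hq : qnil (opsub b (opcomp (opcomp b b) z)).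

Let q := opsub b (opcomp (opcomp b b) z).
Let e := opcomp b z.
Let p := opsub (opid Z) e.

Lemma e_e v : e (e v) = e v.
Proof. simpl. now rewrite <- Hz1. Qed.
Lemma z_e v : z (e v) = z v.
Proof. simpl. now rewrite <- Hz1. Qed.
Lemma e_z v : e (z v) = z v.
Proof. simpl. rewrite Hz2. now rewrite <- Hz1. Qed.
Lemma e_b v : e (b v) = b (e v).
Proof. simpl. now rewrite <- Hz2. Qed.
Lemma zb_e v : z (b v) = e v.
Proof. simpl. now rewrite Hz2. Qed.
Lemma q_bp v : q v = b (p v).
Proof. simpl. rewrite op_sub. reflexivity. Qed.
Lemma p_b v : p (b v) = b (p v).
Proof. unfold p; simpl. rewrite op_sub. f_equal. now rewrite <- Hz2. Qed.
Lemma e_p v : e (p v) = vzero.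
Proof. unfold p. change (e (vsub v (e v)) = vzero). rewrite op_sub, e_e. group_eq. Qed.
Lemma p_e v : p (e v) = vzero.
Proof. unfold p. change (vsub (e v) (e (e v)) = vzero). rewrite e_e. group_eq. Qed.
Lemma p_p v : p (p v) = p v.
Proof. unfold p at 1. change (vsub (p v) (e (p v)) = p v). rewrite e_p. group_eq. Qed.
Lemma p_q v : p (q v) = q v.
Proof. rewrite q_bp, p_b, p_p. reflexivity. Qed.
Lemma decomp v : v = vadd (e v) (p v).
Proof. unfold p. change (v = vadd (e v) (vsub v (e v))). group_eq. Qed.

Lemma bpow_p n v : oppow b n (p v) = oppow q n (p v).
Proof.
  induction n; auto. rewrite !oppow_S, IHn, (q_bp (oppow q n (p v))). f_equal.
  destruct n.
  - rewrite oppow_0, p_p. reflexivity.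
  - rewrite oppow_S, p_q. reflexivity.
Qed.
Lemma p_bpow n v : p (oppow b n v) = oppow b n (p v).
Proof. induction n; auto. rewrite !oppow_S, p_b, IHn. reflexivity. Qed.
Lemma e_bpow n v : e (oppow b n v) = oppow b n (e v).
Proof. induction n; auto. rewrite !oppow_S, e_b, IHn. reflexivity. Qed.

Lemma e_zb n u : e u = oppow z (S n) (oppow b (S n) u).
Proof.
  revert u; induction n; intro u.
  - simpl. rewrite zb_e. reflexivity.
  - rewrite (oppow_Sr z (S n)), (oppow_S b (S n)), zb_e, e_bpow, <- (IHn (e u)).
    symmetry; apply e_e.
Qed.
Lemma e_bz n u : e u = oppow b (S n) (oppow z (S n) u).
Proof.
  induction n; [reflexivity|].
  rewrite (oppow_Sr b (S n)), (oppow_S z (S n)).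
  change (b (z (oppow z (S n) u))) with (e (oppow z (S n) u)).
  assert (E : forall k w, e (oppow z (S k) w) = oppow z (S k) w)
    by (intros k w; simpl; apply e_z).
  rewrite E. exact IHn.
Qed.

Variable c : Op Z Z.
Hypothesis Hc : forall v, c (b v) = b (c v).

Lemma c_bpow n v : c (oppow b n v) = oppow b n (c v).
Proof. induction n; auto. rewrite !oppow_S, Hc, IHn. reflexivity. Qed.

(* e c p = 0: the vector e c p v = z^(n+1) c q^(n+1) p v is smaller than 2^-n for all n. *)
Lemma e_c_p v : e (c (p v)) = vzero.
Proof.
  destruct (op_bnd_pos z) as [kz [Hkz0 Hkz]], (op_bnd_pos c) as [kc [Hkc0 Hkc]].
  set (eps := / (2 * (kz + 1))).
  destruct (qnil_pos q eps Hq) as [K [HK0 HK]]; [apply Rinv_0_lt_compat; lra|].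
  apply (vanish _ (kc * K * vnorm (p v))). intro n.
  rewrite (e_zb n), <- c_bpow, bpow_p.
  pose proof (vnorm_ge0 _ (p v)).
  eapply Rle_trans; [apply (pow_bound z kz); auto|].
  eapply Rle_trans; [apply Rmult_le_compat_l; [nneg|apply Hkc]|].
  eapply Rle_trans;
    [apply Rmult_le_compat_l; [nneg|apply Rmult_le_compat_l; [nneg|apply HK]]|].
  replace (kz ^ S n * (kc * (K * eps ^ S n * vnorm (p v)))) with
     ((kc * K * vnorm (p v)) * (kz * eps) ^ S n) by (rewrite Rpow_mult_distr; ring).
  apply Rmult_le_compat_l; [nneg|]. apply half_pow_S; auto.
Qed.

(* p c e = 0: p c e v = q^(n+1) p c z^(n+1) v is smaller than 2^-n for all n. *)
Lemma p_c_e v : p (c (e v)) = vzero.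
Proof.
  destruct (op_bnd_pos z) as [kz [Hkz0 Hkz]], (op_bnd_pos c) as [kc [Hkc0 Hkc]],
    (op_bnd_pos p) as [kp [Hkp0 Hkp]].
  set (eps := / (2 * (kz + 1))).
  destruct (qnil_pos q eps Hq) as [K [HK0 HK]]; [apply Rinv_0_lt_compat; lra|].
  apply (vanish _ (K * kp * kc * vnorm v)). intro n.
  rewrite (e_bz n), c_bpow, p_bpow, bpow_p.
  pose proof (vnorm_ge0 _ v).
  eapply Rle_trans; [apply HK|].
  assert (Hw : vnorm (p (c (oppow z (S n) v))) <= kp * (kc * (kz ^ S n * vnorm v))).
  { eapply Rle_trans; [apply Hkp|]. apply Rmult_le_compat_l; auto.
    eapply Rle_trans; [apply Hkc|]. apply Rmult_le_compat_l; auto.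
    apply (pow_bound z kz); auto. }
  eapply Rle_trans; [apply Rmult_le_compat_l; [unfold eps; nneg|exact Hw]|].
  replace (K * eps ^ S n * (kp * (kc * (kz ^ S n * vnorm v)))) with
     ((K * kp * kc * vnorm v) * (kz * eps) ^ S n) by (rewrite Rpow_mult_distr; ring).
  apply Rmult_le_compat_l; [nneg|]. apply half_pow_S; auto.
Qed.

(* Hence c commutes with e, decomposing c e v and e c v along e + p = 1. *)
Lemma c_e v : c (e v) = e (c v).
Proof.
  rewrite (decomp (c (e v))), p_c_e, vadd0.
  rewrite (decomp v) at 2. rewrite op_add, op_add, e_c_p, vadd0. reflexivity.
Qed.

Lemma drazin_commute v : z (c v) = c (z v).
Proof.
  rewrite <- z_e, <- (c_e v). change (e v) with (b (z v)). rewrite Hc, zb_e.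
  rewrite <- (c_e (z v)), e_z. reflexivity.
Qed.
End SpectralIdempotent.

Lemma gdrazin_of_square {Z : NormedSpace} (T : Op Z Z) : gdrazin (opcomp T T) -> gdrazin T.
Proof.
  intros [z [H1 [H2 H3]]].
  set (b := opcomp T T) in *.
  assert (Hz1 : forall v, z v = z (b (z v))) by (intro v; apply H1).
  assert (Hz2 : forall v, b (z v) = z (b v)) by (intro v; apply H2).
  assert (Hzc : forall v, z (T v) = T (z v))
    by (intro v; apply (drazin_commute b z Hz1 Hz2 H3 T); reflexivity).
  exists (opcomp T z). split; [|split].
  - intro v. simpl. f_equal. exact (Hz1 v).
  - intro v. simpl. rewrite Hzc. reflexivity.
  - apply qnil_of_square. eapply qnil_ext; [|exact H3].
    intro v. simpl. push. rewrite !Hzc.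
    assert (E : T (T (T (T (T (T (z (z v))))))) = T (T (T (T (z v))))).
    { change (b (b (b (z (z v)))) = b (b (z v))). f_equal. f_equal.
      rewrite Hz2, <- Hz1. reflexivity. }
    rewrite E. group_eq.
Qed.

Lemma gdrazin_square {Z : NormedSpace} (T : Op Z Z) : gdrazin T -> gdrazin (opcomp T T).
Proof.
  intros [x [H1 [H2 H3]]].
  assert (hx1 : forall v, x v = x (T (x v))) by (intro v; apply H1).
  assert (hc : forall v, T (x v) = x (T v)) by (intro v; apply H2).
  exists (opcomp x x). split; [|split].
  - intro v. simpl. rewrite (hc (x v)), <- !hx1. reflexivity.
  - intro v. simpl. rewrite !hc. reflexivity.
  - eapply qnil_ext; [|apply qnil_square; exact H3]. intro v. simpl. push.
    assert (E : forall w, x (T (T (x w))) = T (x w)) by (intro w; rewrite (hc w), <- hx1; reflexivity).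
    rewrite E, <- (hc v), (hc (x v)), <- hx1. group_eq.
Qed.

(** * Cline's formula *)

Lemma gdrazin_cline {Z W : NormedSpace} (G : Op W Z) (H : Op Z W) :
  gdrazin (opcomp H G) -> gdrazin (opcomp G H).
Proof.
  intros [y [H1 [H2 H3]]].
  set (b := opcomp H G) in *.
  assert (Hy1 : forall v, y v = y (b (y v))) by (intro v; apply H1).
  assert (Hy2 : forall v, b (y v) = y (b v)) by (intro v; apply H2).
  assert (K1 : forall w, b (y (y w)) = y w) by (intro w; rewrite Hy2, <- Hy1; reflexivity).
  assert (Hb : forall u, H (G u) = b u) by reflexivity.
  exists (opcomp G (opcomp y (opcomp y H))). split; [|split].
  - intro v. simpl. rewrite !Hb, K1, <- Hy1. reflexivity.
  - intro v. simpl. rewrite !Hb, !Hy2. reflexivity.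
  - (* the quasinilpotent part of G H is G (1 - b y) H, and its powers factor through
       those of the quasinilpotent part q = b - b^2 y of b *)
    set (pi := opsub (opid W) (opcomp b y)).
    set (q := opsub b (opcomp (opcomp b b) y)) in *.
    apply (qnil_factor _ q G (opcomp pi H)); auto.
    assert (T1 : forall v, opsub (opcomp G H) (opcomp (opcomp (opcomp G H) (opcomp G H))
                  (opcomp G (opcomp y (opcomp y H)))) v = G (pi (H v))).
    { intro v. simpl. rewrite !Hb, K1, <- op_sub. reflexivity. }
    assert (T2 : forall u, pi (b u) = q u).
    { intro u. change (vsub (b u) (b (y (b u))) = vsub (b u) (b (b (y u)))).
      rewrite <- Hy2. reflexivity. }
    intros n v. induction n.
    + apply T1.
    + rewrite oppow_S, IHn, T1, oppow_S. simpl (opcomp pi H _). rewrite Hb, T2. reflexivity.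
Qed.


(** * Convergent series of operators *)

Definition cvg {W : NormedSpace} (u : nat -> W) (l : W) : Prop :=
  forall eps, 0 < eps -> exists N, forall n, (N <= n)%nat -> vnorm (vsub (u n) l) < eps.

Section Cvg.
Context {W : NormedSpace}.
Implicit Types u w : nat -> W.
Implicit Types l m : W.

Lemma vnorm_sub_tri (x y z : W) : vnorm (vsub x z) <= vnorm (vsub x y) + vnorm (vsub y z).
Proof.
  replace (vsub x z) with (vadd (vsub x y) (vsub y z)) by group_eq. apply vnorm_tri.
Qed.

Lemma cvg_unique u l1 l2 : cvg u l1 -> cvg u l2 -> l1 = l2.
Proof.
  intros H1 H2. apply vnorm_sub_eq0. pose proof (vnorm_ge0 _ (vsub l1 l2)).
  destruct (Req_dec (vnorm (vsub l1 l2)) 0) as [E|E]; auto. exfalso.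
  set (d := vnorm (vsub l1 l2)) in *.
  destruct (H1 (d/2)) as [N1 HN1]; [lra|]. destruct (H2 (d/2)) as [N2 HN2]; [lra|].
  specialize (HN1 (max N1 N2) ltac:(lia)). specialize (HN2 (max N1 N2) ltac:(lia)).
  pose proof (vnorm_sub_tri l1 (u (max N1 N2)) l2).
  rewrite (vnorm_sub_sym l1 (u (max N1 N2))) in H0. fold d in H0. lra.
Qed.

Lemma cvg_ext u w l : (forall n, u n = w n) -> cvg u l -> cvg w l.
Proof. intros E H e He. destruct (H e He) as [N HN]. exists N; intros n Hn. rewrite <- E; auto. Qed.

Lemma cvg_const l : cvg (fun _ => l) l.
Proof. intros e He. exists 0%nat. intros. replace (vsub l l) with (@vzero W) by group_eq.
  rewrite vnorm_zero; lra. Qed.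

Lemma cvg_add u w l m : cvg u l -> cvg w m -> cvg (fun n => vadd (u n) (w n)) (vadd l m).
Proof.
  intros H1 H2 e He. destruct (H1 (e/2)) as [N1 HN1]; [lra|]. destruct (H2 (e/2)) as [N2 HN2]; [lra|].
  exists (max N1 N2). intros n Hn.
  replace (vsub (vadd (u n) (w n)) (vadd l m)) with (vadd (vsub (u n) l) (vsub (w n) m)) by group_eq.
  eapply Rle_lt_trans; [apply vnorm_tri|].
  specialize (HN1 n ltac:(lia)); specialize (HN2 n ltac:(lia)). lra.
Qed.

Lemma cvg_opp u l : cvg u l -> cvg (fun n => vopp (u n)) (vopp l).
Proof.
  intros H e He. destruct (H e He) as [N HN]. exists N. intros n Hn.
  replace (vsub (vopp (u n)) (vopp l)) with (vopp (vsub (u n) l)) by group_eq.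
  rewrite vnorm_opp. auto.
Qed.

Lemma cvg_sub u w l m : cvg u l -> cvg w m -> cvg (fun n => vsub (u n) (w n)) (vsub l m).
Proof. intros. apply cvg_add; auto. apply cvg_opp; auto. Qed.

Lemma cvg_scal u l a : cvg u l -> cvg (fun n => vscal a (u n)) (vscal a l).
Proof.
  intros H e He. destruct (H (e / (Cmod a + 1))) as [N HN].
  { apply Rdiv_lt_0_compat; auto. unfold Cmod. pose proof (sqrt_pos (fst a * fst a + snd a * snd a)). lra. }
  exists N. intros n Hn. specialize (HN n Hn).
  replace (vsub (vscal a (u n)) (vscal a l)) with (vscal a (vsub (u n) l)).
  2:{ unfold vsub. rewrite vscalDr, vopp_scal. reflexivity. }
  rewrite vnorm_scal. assert (0 <= Cmod a) by (unfold Cmod; apply sqrt_pos).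
  pose proof (vnorm_ge0 _ (vsub (u n) l)).
  apply Rle_lt_trans with ((Cmod a + 1) * vnorm (vsub (u n) l)); [nra|].
  apply (Rmult_lt_compat_l (Cmod a + 1)) in HN; [|lra].
  replace ((Cmod a + 1) * (e / (Cmod a + 1))) with e in HN by (field; lra). lra.
Qed.

Lemma cvg_norm_le u l M : cvg u l -> (forall n, vnorm (u n) <= M) -> vnorm l <= M.
Proof.
  intros H B. destruct (Rle_lt_dec (vnorm l) M) as [h|h]; auto. exfalso.
  destruct (H (vnorm l - M)) as [N HN]; [lra|]. specialize (HN N (le_n _)). specialize (B N).
  pose proof (vnorm_tri _ (u N) (vopp (vsub (u N) l))).
  replace (vadd (u N) (vopp (vsub (u N) l))) with l in H0 by group_eq.
  rewrite vnorm_opp in H0. lra.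
Qed.

Lemma cvg_geo u K r : 0 <= r < 1 -> (forall n, vnorm (u n) <= K * r ^ n) -> cvg u vzero.
Proof.
  intros Hr H e He. set (K1 := Rmax K 1).
  destruct (pow_lt_1_zero r) with (y := e / K1) as [N HN].
  { rewrite Rabs_right; lra. }
  { apply Rdiv_lt_0_compat; auto. unfold K1; pose proof (Rmax_r K 1); lra. }
  exists N. intros n Hn. specialize (HN n Hn). specialize (H n).
  replace (vsub (u n) vzero) with (u n) by group_eq.
  rewrite Rabs_right in HN by (apply Rle_ge, pow_le; lra).
  assert (HK1: 1 <= K1) by apply Rmax_r. assert (K <= K1) by apply Rmax_l.
  pose proof (pow_le r n). apply (Rmult_lt_compat_l K1) in HN; [|lra].
  replace (K1 * (e / K1)) with e in HN by (field; lra). nra.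
Qed.
End Cvg.

Lemma cvg_op {V W : NormedSpace} (T : Op V W) u l : cvg u l -> cvg (fun n => T (u n)) (T l).
Proof.
  intros H e He. destruct (op_bnd_pos T) as [k [Hk0 Hk]].
  destruct (H (e / (k + 1))) as [N HN]; [apply Rdiv_lt_0_compat; lra|].
  exists N. intros n Hn. specialize (HN n Hn). rewrite <- op_sub.
  eapply Rle_lt_trans; [apply Hk|]. pose proof (vnorm_ge0 _ (vsub (u n) l)).
  apply Rle_lt_trans with ((k+1) * vnorm (vsub (u n) l)); [nra|].
  apply (Rmult_lt_compat_l (k+1)) in HN; [|lra].
  replace ((k + 1) * (e / (k + 1))) with e in HN by (field; lra). lra.
Qed.

Fixpoint psum {V W : NormedSpace} (T : nat -> Op V W) (N : nat) (v : V) : W :=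
  match N with
  | O => vzero
  | S N => vadd (psum T N v) (T N v)
  end.

Section Series.
Context {V W : NormedSpace} (hW : complete W) (T : nat -> Op V W) (K r : R).
Hypothesis Hr : 0 <= r < 1.
Hypothesis HK : 0 <= K.
Hypothesis HT : forall n v, vnorm (T n v) <= K * r ^ n * vnorm v.

Lemma psum_tail n k v : vnorm (vsub (psum T (n + k) v) (psum T n v)) <=
   K * vnorm v * (r ^ n - r ^ (n + k)) / (1 - r).
Proof.
  induction k.
  - rewrite Nat.add_0_r. replace (vsub (psum T n v) (psum T n v)) with (@vzero W) by group_eq.
    rewrite vnorm_zero. unfold Rdiv. rewrite Rminus_diag. rewrite Rmult_0_r, Rmult_0_l. lra.
  - replace (n + S k)%nat with (S (n + k)) by lia. simpl psum.
    replace (vsub (vadd (psum T (n + k) v) (T (n + k)%nat v)) (psum T n v))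
      with (vadd (vsub (psum T (n + k) v) (psum T n v)) (T (n + k)%nat v)) by group_eq.
    eapply Rle_trans; [apply vnorm_tri|]. specialize (HT (n+k)%nat v).
    replace (K * vnorm v * (r ^ n - r ^ S (n + k)) / (1 - r)) with
       (K * vnorm v * (r ^ n - r ^ (n + k)) / (1 - r) + K * r ^ (n + k) * vnorm v).
    2:{ simpl. field. lra. }
    lra.
Qed.

Lemma psum_bound N v : vnorm (psum T N v) <= K / (1 - r) * vnorm v.
Proof.
  pose proof (psum_tail 0 N v). simpl in H.
  replace (vsub (psum T N v) vzero) with (psum T N v) in H by group_eq.
  eapply Rle_trans; [exact H|]. pose proof (vnorm_ge0 _ v). pose proof (pow_le r N).
  replace (K * vnorm v * (1 - r ^ N) / (1 - r)) with ((K * vnorm v / (1 - r)) * (1 - r ^ N)) by (field; lra).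
  replace (K / (1 - r) * vnorm v) with ((K * vnorm v / (1 - r)) * 1) by (field; lra).
  apply Rmult_le_compat_l; [|lra]. apply Rmult_le_pos; [nra|left; apply Rinv_0_lt_compat; lra].
Qed.

Lemma psum_exists v : exists l, cvg (fun N => psum T N v) l.
Proof.
  apply hW. intros e He.
  set (c := K * vnorm v / (1 - r) + 1).
  assert (Hc: 0 < c). { unfold c. pose proof (vnorm_ge0 _ v).
    assert (0 <= K * vnorm v / (1 - r)) by (apply Rmult_le_pos; [nra|left; apply Rinv_0_lt_compat; lra]). lra. }
  destruct (pow_lt_1_zero r) with (y := e / c) as [N HN].
  { rewrite Rabs_right; lra. } { apply Rdiv_lt_0_compat; auto. }
  exists N. intros n m Hn Hm.
  assert (G: forall a b, (N <= a)%nat -> (a <= b)%nat -> vnorm (vsub (psum T b v) (psum T a v)) < e).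
  { intros a b Ha Hb. replace b with (a + (b - a))%nat by lia.
    eapply Rle_lt_trans; [apply psum_tail|].
    specialize (HN a Ha). rewrite Rabs_right in HN by (apply Rle_ge, pow_le; lra).
    pose proof (pow_le r (a + (b - a))). pose proof (vnorm_ge0 _ v).
    apply Rle_lt_trans with (K * vnorm v / (1 - r) * r ^ a).
    { unfold Rdiv. rewrite !Rmult_assoc. apply Rmult_le_compat_l; auto.
      apply Rmult_le_compat_l; auto. rewrite Rmult_comm. apply Rmult_le_compat_l.
      left; apply Rinv_0_lt_compat; lra. lra. }
    apply Rle_lt_trans with (c * r ^ a).
    { apply Rmult_le_compat_r; [apply pow_le; lra|unfold c; lra]. }
    apply (Rmult_lt_compat_l c) in HN; auto. replace (c * (e / c)) with e in HN by (field; lra). lra. }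
  destruct (le_lt_dec n m).
  - rewrite vnorm_sub_sym. apply G; auto.
  - apply G; auto. lia.
Qed.

Definition slim (v : V) : W := proj1_sig (constructive_indefinite_description _ (psum_exists v)).
Lemma slim_cvg v : cvg (fun N => psum T N v) (slim v).
Proof. unfold slim. destruct constructive_indefinite_description; auto. Qed.

Lemma psum_add N v w : psum T N (vadd v w) = vadd (psum T N v) (psum T N w).
Proof. induction N; simpl. - group_eq. - rewrite IHN, op_add. group_eq. Qed.
Lemma psum_scal N a v : psum T N (vscal a v) = vscal a (psum T N v).
Proof. induction N; simpl. - now rewrite vscal_zero. - rewrite IHN, op_scal, vscalDr. reflexivity. Qed.

Definition sop : Op V W.
Proof.
  refine (mkOp V W slim _ _ _).
  - intros x y. apply (cvg_unique (fun N => psum T N (vadd x y))). apply slim_cvg.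
    eapply cvg_ext; [|apply cvg_add; apply slim_cvg]. intro n; simpl. symmetry; apply psum_add.
  - intros a x. apply (cvg_unique (fun N => psum T N (vscal a x))). apply slim_cvg.
    eapply cvg_ext; [|apply cvg_scal; apply slim_cvg]. intro n; simpl. symmetry; apply psum_scal.
  - exists (K / (1 - r)). intro x. apply (cvg_norm_le _ _ _ (slim_cvg x)). intro n. apply psum_bound.
Defined.

Lemma sop_cvg v : cvg (fun N => psum T N v) (sop v).
Proof. apply slim_cvg. Qed.
End Series.

Lemma psum_0 {V W : NormedSpace} (T : nat -> Op V W) v : psum T 0 v = vzero.
Proof. reflexivity. Qed.
Lemma psum_S {V W : NormedSpace} (T : nat -> Op V W) N v : psum T (S N) v = vadd (psum T N v) (T N v).
Proof. reflexivity. Qed.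

Section PsumFacts.
Context {V W : NormedSpace}.

Lemma psum_fix (R : Op W W) (T : nat -> Op V W) v :
  (forall n, R (T n v) = T n v) -> forall N, R (psum T N v) = psum T N v.
Proof. intros H N; induction N; simpl; [apply op_zero|]. rewrite op_add, IHN, H. reflexivity. Qed.

Lemma psum_kill (R : Op W W) (T : nat -> Op V W) v :
  (forall n, R (T n v) = vzero) -> forall N, R (psum T N v) = vzero.
Proof. intros H N; induction N; simpl; [apply op_zero|]. rewrite op_add, IHN, H. apply vadd0. Qed.

Lemma psum_ext (T : nat -> Op V W) v w :
  (forall n, T n v = T n w) -> forall N, psum T N v = psum T N w.
Proof. intros H N; induction N; simpl; auto. rewrite IHN, H. reflexivity. Qed.

Lemma term_cvg (T : nat -> Op V W) K w :
  (forall n v, vnorm (T n v) <= K * (/2) ^ n * vnorm v) -> cvg (fun n => T n w) vzero.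
Proof.
  intros H. apply (cvg_geo _ (K * vnorm w) (/2)); [lra|]. intro n.
  eapply Rle_trans; [apply H|]. right; ring.
Qed.
End PsumFacts.

Section Prod.
Context {V W : NormedSpace}.

Lemma prod_add (x1 x2 : V) (y1 y2 : W) :
  @vadd (NSprod V W) (x1, y1) (x2, y2) = (vadd x1 x2, vadd y1 y2).
Proof. reflexivity. Qed.
Lemma prod_norm (x : V) (y : W) : @vnorm (NSprod V W) (x, y) = vnorm x + vnorm y.
Proof. reflexivity. Qed.
Lemma prod_split (x : V) (y : W) :
  ((x, y) : NSprod V W) = vadd ((x, vzero) : NSprod V W) (vzero, y).
Proof. rewrite prod_add, vadd0, v0add. reflexivity. Qed.

Lemma prod_complete : complete V -> complete W -> complete (NSprod V W).
Proof.
  intros hV hW u Hu.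
  destruct (hV (fun n => fst (u n))) as [l1 H1].
  { intros e He. destruct (Hu e He) as [N HN]. exists N. intros n m Hn Hm.
    specialize (HN n m Hn Hm). destruct (u n) as [a b], (u m) as [a' b']. simpl in *.
    pose proof (vnorm_ge0 _ (vsub b b')).
    change (vnorm (vsub a a') + vnorm (vsub b b') < e) in HN. lra. }
  destruct (hW (fun n => snd (u n))) as [l2 H2].
  { intros e He. destruct (Hu e He) as [N HN]. exists N. intros n m Hn Hm.
    specialize (HN n m Hn Hm). destruct (u n) as [a b], (u m) as [a' b']. simpl in *.
    pose proof (vnorm_ge0 _ (vsub a a')).
    change (vnorm (vsub a a') + vnorm (vsub b b') < e) in HN. lra. }
  exists (l1, l2). intros e He.
  destruct (H1 (e/2)) as [N1 HN1]; [lra|]. destruct (H2 (e/2)) as [N2 HN2]; [lra|].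
  exists (max N1 N2). intros n Hn. specialize (HN1 n ltac:(lia)). specialize (HN2 n ltac:(lia)).
  destruct (u n) as [a b]. simpl in *. change (vnorm (vsub a l1) + vnorm (vsub b l2) < e). lra.
Qed.

Definition corner (T : Op (NSprod V W) (NSprod V W)) : Op V W.
Proof.
  refine (mkOp V W (fun x => snd (T (x, vzero))) _ _ _).
  - intros x y. rewrite <- (vadd0 W vzero) at 1. rewrite <- prod_add, op_add. reflexivity.
  - intros s x. rewrite <- (vscal_zero s) at 1.
    change ((vscal s x, vscal s vzero)) with (@vscal (NSprod V W) s (x, vzero)).
    rewrite op_scal. reflexivity.
  - destruct (op_bnd_pos T) as [k [Hk0 Hk]]. exists k. intro x.
    specialize (Hk (x, vzero)). rewrite prod_norm, vnorm_zero, Rplus_0_r in Hk.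
    destruct (T (x, vzero)) as [u w]. rewrite prod_norm in Hk.
    pose proof (vnorm_ge0 _ u). simpl. lra.
Defined.
End Prod.

(** * Quasinilpotence of lower triangular matrices *)

(* tsum c a d x n = sum_(k < n) d^(n-1-k) c a^k x, the corner of [a 0; c d]^n. *)
Fixpoint tsum {V W : NormedSpace} (c : Op V W) (a : Op V V) (d : Op W W) (x : V) (n : nat) : W :=
  match n with
  | O => vzero
  | S n => vadd (c (oppow a n x)) (d (tsum c a d x n))
  end.

Lemma tsum_bound {V W : NormedSpace} (c : Op V W) (a : Op V V) (d : Op W W)
    (e Ka Kd kc : R) :
  0 < e -> 0 <= Ka -> 0 <= Kd -> 0 <= kc ->
  (forall n x, vnorm (oppow a n x) <= Ka * e ^ n * vnorm x) ->
  (forall n y, vnorm (oppow d n y) <= Kd * e ^ n * vnorm y) ->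
  (forall x, vnorm (c x) <= kc * vnorm x) ->
  forall x n m, e * vnorm (oppow d m (tsum c a d x n)) <= INR n * (Kd * kc * Ka) * e ^ (m + n) * vnorm x.
Proof.
  intros He HKa HKd Hkc Ha Hd Hc x n. pose proof (vnorm_ge0 _ x).
  induction n; intro m.
  - simpl tsum. rewrite op_zero, vnorm_zero. simpl. lra.
  - change (tsum c a d x (S n)) with (vadd (c (oppow a n x)) (d (tsum c a d x n))).
    rewrite op_add, <- (oppow_Sr d m).
    eapply Rle_trans; [apply Rmult_le_compat_l; [lra|apply vnorm_tri]|].
    rewrite Rmult_plus_distr_l. specialize (IHn (S m)).
    replace (S m + n)%nat with (m + S n)%nat in IHn by lia.
    assert (H1 : vnorm (oppow d m (c (oppow a n x))) <= Kd * e ^ m * (kc * (Ka * e ^ n * vnorm x))).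
    { eapply Rle_trans; [apply Hd|]. apply Rmult_le_compat_l; [nneg|].
      eapply Rle_trans; [apply Hc|]. apply Rmult_le_compat_l; auto. }
    apply Rmult_le_compat_l with (r := e) in H1; [|lra].
    replace (e * (Kd * e ^ m * (kc * (Ka * e ^ n * vnorm x)))) with
      (Kd * kc * Ka * e ^ (m + S n) * vnorm x) in H1 by (rewrite pow_add; simpl; ring).
    rewrite S_INR. lra.
Qed.

Lemma INR_mul_half_pow n e0 : 0 <= e0 -> INR n * (e0 / 2) ^ n <= e0 ^ n.
Proof.
  intro He0. unfold Rdiv. rewrite Rpow_mult_distr, pow_inv.
  pose proof (INR_lt_pow2 n). pose proof (pow_lt 2 n ltac:(lra)). pose proof (pow_le e0 n He0).
  replace (INR n * (e0 ^ n * / 2 ^ n)) with (e0 ^ n * (INR n / 2 ^ n)) by (field; lra).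
  rewrite <- (Rmult_1_r (e0 ^ n)) at 2. apply Rmult_le_compat_l; auto.
  unfold Rdiv. apply (Rmult_le_reg_r (2 ^ n)); auto. rewrite Rmult_assoc, Rinv_l by lra. lra.
Qed.

(* Throughout, T = [a 0; c d] on V ⊕ W, described through its action on coordinates. *)
Section LowerTriangular.
Context {V W : NormedSpace} (T : Op (NSprod V W) (NSprod V W)) (a : Op V V) (d : Op W W).
Hypothesis Hfst : forall x y, fst (T (x, y)) = a x.
Hypothesis Hsnd : forall y, snd (T (vzero, y)) = d y.

Lemma snd_lower x y : snd (T (x, y)) = vadd (corner T x) (d y).
Proof. rewrite prod_split, op_add. simpl. rewrite Hsnd. reflexivity. Qed.

Lemma fst_lower_pow n x y : fst (oppow T n (x, y)) = oppow a n x.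
Proof.
  induction n; auto. rewrite !oppow_S, (surjective_pairing (oppow T n (x, y))), Hfst, IHn.
  reflexivity.
Qed.

Lemma snd_lower_pow n x y :
  snd (oppow T n (x, y)) = vadd (oppow d n y) (tsum (corner T) a d x n).
Proof.
  induction n.
  - simpl. group_eq.
  - rewrite !oppow_S, (surjective_pairing (oppow T n (x, y))).
    rewrite snd_lower, fst_lower_pow, IHn, op_add.
    change (tsum (corner T) a d x (S n))
      with (vadd (corner T (oppow a n x)) (d (tsum (corner T) a d x n))).
    group_eq.
Qed.

Lemma qnil_lower_triangular : qnil a -> qnil d -> qnil T.
Proof.
  intros Ha Hd e0 He0. set (e := e0 / 2).
  assert (He : 0 < e) by (unfold e; lra).
  destruct (qnil_pos a e Ha He) as [Ka [HKa0 HKa]].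
  destruct (qnil_pos d e Hd He) as [Kd [HKd0 HKd]].
  destruct (op_bnd_pos (corner T)) as [kc [Hkc0 Hkc]].
  set (KK := Kd * kc * Ka).
  assert (HKK : 0 <= KK) by (unfold KK; nneg).
  exists (Ka + Kd + KK / e). intros n [x y].
  rewrite (surjective_pairing (oppow T n (x, y))), prod_norm, fst_lower_pow, snd_lower_pow,
    prod_norm.
  pose proof (vnorm_ge0 _ x). pose proof (vnorm_ge0 _ y).
  assert (Hee : e ^ n <= e0 ^ n) by (apply pow_incr; unfold e; lra).
  assert (Hn : INR n * e ^ n <= e0 ^ n) by (apply INR_mul_half_pow; lra).
  pose proof (tsum_bound (corner T) a d e Ka Kd kc He HKa0 HKd0 Hkc0 HKa HKd Hkc x n 0) as Bs.
  simpl (0 + n)%nat in Bs. rewrite oppow_0 in Bs. fold KK in Bs.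
  specialize (HKa n x). specialize (HKd n y).
  pose proof (vnorm_tri _ (oppow d n y) (tsum (corner T) a d x n)).
  set (t := vnorm (tsum (corner T) a d x n)) in *.
  assert (Ht : t <= KK / e * e0 ^ n * vnorm x).
  { apply (Rmult_le_reg_l e); auto. eapply Rle_trans; [exact Bs|].
    replace (e * (KK / e * e0 ^ n * vnorm x)) with (KK * vnorm x * e0 ^ n) by (field; lra).
    replace (INR n * KK * e ^ n * vnorm x) with (KK * vnorm x * (INR n * e ^ n)) by ring.
    apply Rmult_le_compat_l; nneg. }
  assert (0 <= e0 ^ n) by nneg.
  assert (0 <= KK / e) by nneg.
  assert (Ka * e ^ n * vnorm x <= Ka * e0 ^ n * vnorm x)
    by (apply Rmult_le_compat_r; auto; apply Rmult_le_compat_l; auto).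
  assert (Kd * e ^ n * vnorm y <= Kd * e0 ^ n * vnorm y)
    by (apply Rmult_le_compat_r; auto; apply Rmult_le_compat_l; auto).
  assert (0 <= Ka * e0 ^ n * vnorm y) by nneg.
  assert (0 <= Kd * e0 ^ n * vnorm x) by nneg.
  assert (0 <= KK / e * e0 ^ n * vnorm y) by nneg.
  replace ((Ka + Kd + KK / e) * e0 ^ n * (vnorm x + vnorm y)) with
    (Ka * e0 ^ n * vnorm x + Ka * e0 ^ n * vnorm y + Kd * e0 ^ n * vnorm x
     + Kd * e0 ^ n * vnorm y + KK / e * e0 ^ n * vnorm x + KK / e * e0 ^ n * vnorm y) by ring.
  lra.
Qed.
End LowerTriangular.

(** * The corner of the g-Drazin inverse of a lower triangular matrix *)

(* For [A 0; C D] with g-Drazin inverses a', d' of A, D, the inverse is [a' 0; X d'] where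
   X = sum_n d'^(n+2) C A^n pA + sum_n pD D^n C a'^(n+2) - d' C a',
   pA = 1 - A a' and pD = 1 - D d' being the spectral projections.  Both series converge
   geometrically because A pA and D pD are quasinilpotent. *)
Section Sylvester.
Context {V W : NormedSpace} (hW : complete W) (A a' : Op V V) (C : Op V W) (D d' : Op W W).
Hypothesis hA1 : forall v, a' v = a' (A (a' v)).
Hypothesis hA2 : forall v, A (a' v) = a' (A v).
Hypothesis hA3 : qnil (opsub A (opcomp (opcomp A A) a')).
Hypothesis hD1 : forall v, d' v = d' (D (d' v)).
Hypothesis hD2 : forall v, D (d' v) = d' (D v).
Hypothesis hD3 : qnil (opsub D (opcomp (opcomp D D) d')).

Let piA := opsub (opid V) (opcomp A a').
Let piD := opsub (opid W) (opcomp D d').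

Definition termA (n : nat) : Op V W :=
  opcomp (oppow d' (S (S n))) (opcomp C (opcomp (oppow A n) piA)).
Definition termD (n : nat) : Op V W :=
  opcomp piD (opcomp (oppow D n) (opcomp C (oppow a' (S (S n))))).

Lemma termA_app n v : termA n v = oppow d' (S (S n)) (C (oppow A n (piA v))).
Proof. reflexivity. Qed.
Lemma termD_app n v : termD n v = piD (oppow D n (C (oppow a' (S (S n)) v))).
Proof. reflexivity. Qed.

(* Both series are dominated by K 2^-n: the growth of d'^n (resp. a'^n) is beaten by the
   decay of (A pA)^n (resp. (D pD)^n), using [qnil] with eps = 1/(2(k+1)). *)
Lemma termA_bound : exists K, 0 <= K /\ forall n v, vnorm (termA n v) <= K * (/2) ^ n * vnorm v.
Proof.
  destruct (op_bnd_pos d') as [kd [Hkd0 Hkd]], (op_bnd_pos C) as [kc [Hkc0 Hkc]],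
    (op_bnd_pos piA) as [kp [Hkp0 Hkp]].
  set (eps := / (2 * (kd + 1))).
  destruct (qnil_pos _ eps hA3) as [KA [HKA0 HKA]]; [apply Rinv_0_lt_compat; lra|].
  exists (kd ^ 2 * kc * KA * kp). split; [nneg|].
  intros n v. rewrite termA_app. pose proof (vnorm_ge0 _ v).
  eapply Rle_trans; [apply (pow_bound d' kd); auto|].
  unfold piA. rewrite (bpow_p A a' hA1 hA2). fold piA.
  assert (H1 : vnorm (C (oppow (opsub A (opcomp (opcomp A A) a')) n (piA v)))
               <= kc * (KA * eps ^ n * (kp * vnorm v))).
  { eapply Rle_trans; [apply Hkc|]. apply Rmult_le_compat_l; auto.
    eapply Rle_trans; [apply HKA|]. apply Rmult_le_compat_l; [unfold eps; nneg|].
    apply Hkp. }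
  eapply Rle_trans; [apply Rmult_le_compat_l; [nneg|exact H1]|].
  replace (kd ^ S (S n) * (kc * (KA * eps ^ n * (kp * vnorm v)))) with
    ((kd ^ 2 * kc * KA * kp * vnorm v) * (kd * eps) ^ n)
    by (rewrite Rpow_mult_distr; simpl; ring).
  replace (kd ^ 2 * kc * KA * kp * (/ 2) ^ n * vnorm v) with
    ((kd ^ 2 * kc * KA * kp * vnorm v) * (/2) ^ n) by ring.
  apply Rmult_le_compat_l; [nneg|]. apply half_pow; auto.
Qed.

Lemma termD_bound : exists K, 0 <= K /\ forall n v, vnorm (termD n v) <= K * (/2) ^ n * vnorm v.
Proof.
  destruct (op_bnd_pos a') as [ka [Hka0 Hka]], (op_bnd_pos C) as [kc [Hkc0 Hkc]],
    (op_bnd_pos piD) as [kp [Hkp0 Hkp]].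
  set (eps := / (2 * (ka + 1))).
  destruct (qnil_pos _ eps hD3) as [KD [HKD0 HKD]]; [apply Rinv_0_lt_compat; lra|].
  exists (KD * kp * kc * ka ^ 2). split; [nneg|].
  intros n v. rewrite termD_app. pose proof (vnorm_ge0 _ v).
  unfold piD. rewrite (p_bpow D d' hD2), (bpow_p D d' hD1 hD2). fold piD.
  eapply Rle_trans; [apply HKD|].
  assert (H1 : vnorm (piD (C (oppow a' (S (S n)) v))) <= kp * (kc * (ka ^ S (S n) * vnorm v))).
  { eapply Rle_trans; [apply Hkp|]. apply Rmult_le_compat_l; auto.
    eapply Rle_trans; [apply Hkc|]. apply Rmult_le_compat_l; auto.
    apply (pow_bound a' ka); auto. }
  eapply Rle_trans; [apply Rmult_le_compat_l; [unfold eps; nneg|exact H1]|].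
  replace (KD * eps ^ n * (kp * (kc * (ka ^ S (S n) * vnorm v)))) with
    ((KD * kp * kc * ka ^ 2 * vnorm v) * (ka * eps) ^ n)
    by (rewrite Rpow_mult_distr; simpl; ring).
  replace (KD * kp * kc * ka ^ 2 * (/ 2) ^ n * vnorm v) with
    ((KD * kp * kc * ka ^ 2 * vnorm v) * (/2) ^ n) by ring.
  apply Rmult_le_compat_l; [nneg|]. apply half_pow; auto.
Qed.

Lemma Dd'd' s : D (d' (d' s)) = d' s.
Proof. rewrite hD2. symmetry. apply hD1. Qed.

Lemma half_in_unit : 0 <= /2 < 1.
Proof. lra. Qed.

Section Sums.
Variables KA KD : R.
Hypothesis HKA : 0 <= KA.
Hypothesis HKD : 0 <= KD.
Hypothesis HTA : forall n v, vnorm (termA n v) <= KA * (/2) ^ n * vnorm v.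
Hypothesis HTD : forall n v, vnorm (termD n v) <= KD * (/2) ^ n * vnorm v.

Let sumA := sop hW termA KA (/2) half_in_unit HKA HTA.
Let sumD := sop hW termD KD (/2) half_in_unit HKD HTD.

Lemma sumA_cvg v : cvg (fun N => psum termA N v) (sumA v).
Proof. apply sop_cvg. Qed.
Lemma sumD_cvg v : cvg (fun N => psum termD N v) (sumD v).
Proof. apply sop_cvg. Qed.

(* D sumA - sumA A telescopes to d' C pA. *)
Lemma D_sumA v : D (sumA v) = vadd (sumA (A v)) (d' (C (piA v))).
Proof.
  set (h := fun n => oppow d' (S n) (C (oppow A n (piA v)))).
  assert (Eh1 : forall n, D (termA n v) = h n).
  { intro n. rewrite termA_app. unfold h.
    rewrite (oppow_S d' (S n)), (oppow_S d' n), Dd'd'. reflexivity. }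
  assert (Eh2 : forall n, termA n (A v) = h (S n)).
  { intro n. rewrite termA_app. unfold h. do 2 f_equal. unfold piA.
    rewrite (p_b A a' hA2), <- oppow_Sr. reflexivity. }
  assert (Ps : forall N, D (psum termA N v) = vadd (psum termA N (A v)) (vsub (h 0%nat) (h N))).
  { induction N.
    - rewrite !psum_0, op_zero. group_eq.
    - rewrite !psum_S, op_add, IHN, Eh1, Eh2. group_eq. }
  apply (cvg_unique (fun N => D (psum termA N v))); [apply cvg_op, sumA_cvg|].
  replace (vadd (sumA (A v)) (d' (C (piA v)))) with (vadd (sumA (A v)) (vsub (h 0%nat) vzero))
    by (unfold h; simpl; group_eq).
  eapply cvg_ext; [intro n; symmetry; apply Ps|].
  apply cvg_add; [apply sumA_cvg|]. apply cvg_sub; [apply cvg_const|].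
  eapply cvg_ext; [intro n; apply Eh1|].
  rewrite <- (op_zero D). apply cvg_op. eapply term_cvg. exact HTA.
Qed.

(* D sumD - sumD A telescopes to - pD C a'. *)
Lemma D_sumD v : D (sumD v) = vsub (sumD (A v)) (piD (C (a' v))).
Proof.
  set (f := fun n => piD (oppow D n (C (oppow a' (S n) v)))).
  assert (Ef1 : forall n, D (termD n v) = f (S n)).
  { intro n. rewrite termD_app. unfold f, piD. rewrite <- (p_b D d' hD2). reflexivity. }
  assert (Ef2 : forall n, termD n (A v) = f n).
  { intro n. rewrite termD_app. unfold f. do 3 f_equal.
    rewrite (oppow_Sr a' (S n)), <- hA2, (oppow_Sr a' n), <- hA1, <- oppow_Sr. reflexivity. }
  assert (Ps : forall N, D (psum termD N v) = vadd (psum termD N (A v)) (vsub (f N) (f 0%nat))).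
  { induction N.
    - rewrite !psum_0, op_zero. group_eq.
    - rewrite !psum_S, op_add, IHN, Ef1, Ef2. group_eq. }
  apply (cvg_unique (fun N => D (psum termD N v))); [apply cvg_op, sumD_cvg|].
  replace (vsub (sumD (A v)) (piD (C (a' v)))) with (vadd (sumD (A v)) (vsub vzero (f 0%nat)))
    by (unfold f; simpl; group_eq).
  eapply cvg_ext; [intro n; symmetry; apply Ps|].
  apply cvg_add; [apply sumD_cvg|]. apply cvg_sub; [|apply cvg_const].
  eapply cvg_ext; [intro n; apply Ef2|].
  eapply term_cvg. exact HTD.
Qed.

Lemma sumA_Aa' v : sumA (A (a' v)) = vzero.
Proof.
  apply (cvg_unique (fun N => psum termA N (A (a' v)))); [apply sumA_cvg|].
  eapply cvg_ext; [|apply cvg_const]. intro N. symmetry.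
  apply (psum_kill (opid W)). intro n. change (termA n (A (a' v)) = vzero). rewrite termA_app.
  change (A (a' v)) with (opcomp A a' v). unfold piA. rewrite (p_e A a' hA1), !op_zero.
  reflexivity.
Qed.

Lemma Dd'_sumA v : D (d' (sumA v)) = sumA v.
Proof.
  apply (cvg_unique (fun N => psum termA N v)); [|apply sumA_cvg].
  eapply cvg_ext; [|apply (cvg_op (opcomp D d')); apply sumA_cvg].
  intro N. apply (psum_fix (opcomp D d')). intro n.
  rewrite termA_app, (oppow_S d' (S n)). apply Dd'd'.
Qed.

Lemma sumD_Aa' v : sumD (A (a' v)) = sumD v.
Proof.
  apply (cvg_unique (fun N => psum termD N v)); [|apply sumD_cvg].
  eapply cvg_ext; [|apply sumD_cvg]. apply psum_ext. intro n. rewrite !termD_app.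
  rewrite (oppow_Sr a' (S n) (A (a' v))), <- hA1, <- oppow_Sr. reflexivity.
Qed.

Lemma Dd'_sumD v : D (d' (sumD v)) = vzero.
Proof.
  apply (cvg_unique (fun N => D (d' (psum termD N v)))).
  - apply (cvg_op (opcomp D d')). apply sumD_cvg.
  - eapply cvg_ext; [|apply cvg_const]. intro N. symmetry.
    apply (psum_kill (opcomp D d')). intro n. rewrite termD_app. unfold piD.
    apply (e_p D d' hD1).
Qed.
End Sums.

(* The corner X commutes ([A 0; C D] [a' 0; X d'] = [a' 0; X d'] [A 0; C D] in the corner)
   and satisfies the corner of Y M Y = Y for Y = [a' 0; X d']. *)
Lemma sylvester_corner : exists X : Op V W,
  (forall v, vadd (C (a' v)) (D (X v)) = vadd (X (A v)) (d' (C v))) /\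
  (forall v, vadd (vadd (X (A (a' v))) (d' (C (a' v)))) (d' (D (X v))) = X v).
Proof.
  destruct termA_bound as [KA [HKA HTA]], termD_bound as [KD [HKD HTD]].
  pose proof (D_sumA KA HKA HTA) as DA. pose proof (D_sumD KD HKD HTD) as DD.
  pose proof (sumA_Aa' KA HKA HTA) as AA. pose proof (sumD_Aa' KD HKD HTD) as AD.
  pose proof (Dd'_sumA KA HKA HTA) as PA. pose proof (Dd'_sumD KD HKD HTD) as PD.
  set (sumA := sop hW termA KA (/2) half_in_unit HKA HTA) in *.
  set (sumD := sop hW termD KD (/2) half_in_unit HKD HTD) in *.
  clearbody sumA sumD.
  exists (opsub (opadd sumA sumD) (opcomp d' (opcomp C a'))). split.
  - intro v. simpl. push. rewrite DA, DD. unfold piA, piD. simpl. push. rewrite hA2. group_eq.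
  - intro v. simpl. push. rewrite AA, AD, <- hA1.
    rewrite <- (hD2 (sumA v)), <- (hD2 (sumD v)), PA, PD, <- hD1. group_eq.
Qed.
End Sylvester.

Lemma vadd_cancel_eq {X : NormedSpace} (l r s t : X) : s = t -> vadd l t = vadd r s -> l = r.
Proof. intros -> H. apply (vadd_cancel_l t). rewrite vaddC, H. apply vaddC. Qed.

Lemma gdrazin_lower_triangular {V W : NormedSpace} (hW : complete W)
    (A : Op V V) (C : Op V W) (D : Op W W) :
  gdrazin A -> gdrazin D -> gdrazin (opmatrix A opzero C D).
Proof.
  intros [a' [HA1 [HA2 HA3]]] [d' [HD1 [HD2 HD3]]].
  assert (hA1 : forall v, a' v = a' (A (a' v))) by (intro v; apply HA1).
  assert (hA2 : forall v, A (a' v) = a' (A v)) by (intro v; apply HA2).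
  assert (hD1 : forall v, d' v = d' (D (d' v))) by (intro v; apply HD1).
  assert (hD2 : forall v, D (d' v) = d' (D v)) by (intro v; apply HD2).
  destruct (sylvester_corner hW A a' C D d' hA1 hA2 HA3 hD1 hD2 HD3) as [X [Hcomm Hinner]].
  exists (opmatrix a' opzero X d'). split; [|split].
  - intros [x y]. simpl. f_equal; push.
    + rewrite <- hA1. group_eq.
    + rewrite <- (hD1 y). apply (vadd_cancel_eq _ _ _ _ (eq_sym (Hinner x))). group_eq.
  - intros [x y]. simpl. f_equal; push.
    + rewrite hA2. group_eq.
    + rewrite hD2. apply (vadd_cancel_eq _ _ _ _ (Hcomm x)). group_eq.
  - refine (qnil_lower_triangular _ _ _ _ _ HA3 HD3).
    + intros x y. simpl. fold_opp. push. group_eq.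
    + intro y. simpl. fold_opp. push. group_eq.
Qed.

(** * Sums with vanishing product *)

Section Add.
Context {Z : NormedSpace}.

(* G (u, v) = u + Q v and H z = (P z, z), so that G H = P + Q and H G = [P PQ; I Q]. *)
Definition opG (Q : Op Z Z) : Op (NSprod Z Z) Z.
Proof.
  refine (mkOp (NSprod Z Z) Z (fun p => vadd (fst p) (Q (snd p))) _ _ _).
  - intros [a b] [c d]. simpl. rewrite op_add. group_eq.
  - intros s [a b]. simpl. rewrite op_scal, vscalDr. reflexivity.
  - destruct (op_bnd_pos Q) as [k [Hk0 Hk]]. exists (1 + k). intros [a b]. simpl.
    eapply Rle_trans; [apply vnorm_tri|]. pose proof (Hk b). pose proof (vnorm_ge0 _ a).
    pose proof (vnorm_ge0 _ b). change (vnorm (fst (a, b))) with (vnorm a).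
    change (@vnorm (NSprod Z Z) (a, b)) with (vnorm a + vnorm b). nra.
Defined.

Definition opH (P : Op Z Z) : Op Z (NSprod Z Z).
Proof.
  refine (mkOp Z (NSprod Z Z) (fun z => (P z, z)) _ _ _).
  - intros x y. simpl. rewrite op_add. reflexivity.
  - intros s x. simpl. rewrite op_scal. reflexivity.
  - destruct (op_bnd_pos P) as [k [Hk0 Hk]]. exists (k + 1). intro x.
    change (@vnorm (NSprod Z Z) (P x, x)) with (vnorm (P x) + vnorm x).
    pose proof (Hk x). lra.
Defined.

(* If PQ = 0 then H G = [P 0; I Q] is lower triangular, so Cline's formula applies. *)
Lemma gdrazin_add (hZ : complete Z) (P Q : Op Z Z) :
  gdrazin P -> gdrazin Q -> (forall v, P (Q v) = vzero) -> gdrazin (opadd P Q).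
Proof.
  intros HP HQ HPQ.
  assert (Ht : gdrazin (opmatrix P opzero (opid Z) Q))
    by (apply gdrazin_lower_triangular; auto).
  assert (Hhg : gdrazin (opcomp (opH P) (opG Q))).
  { eapply gdrazin_ext; [|exact Ht]. intros [u v]. simpl. f_equal.
    rewrite op_add, HPQ. reflexivity. }
  apply gdrazin_cline in Hhg. eapply gdrazin_ext; [|exact Hhg]. intro v. reflexivity.
Qed.
End Add.

Section Blocks.
Context {X Y : NormedSpace}.

Lemma gdrazin_diag_left (hY : complete Y) (A : Op X X) :
  gdrazin A -> gdrazin (@opmatrix X Y A opzero opzero opzero).
Proof.
  intro hA. apply gdrazin_lower_triangular; auto.
  apply (gdrazin_nilpotent _ 1). intro v; reflexivity.
Qed.

Lemma gdrazin_diag_right (hY : complete Y) (D : Op Y Y) :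
  gdrazin D -> gdrazin (@opmatrix X Y opzero opzero opzero D).
Proof.
  intro hD. apply gdrazin_lower_triangular; auto.
  apply (gdrazin_nilpotent _ 1). intro v; reflexivity.
Qed.

Lemma gdrazin_upper_block (B : Op Y X) : gdrazin (@opmatrix X Y opzero B opzero opzero).
Proof. apply (gdrazin_nilpotent _ 2). intros [x y]. simpl. push. f_equal; group_eq. Qed.

Lemma gdrazin_lower_block (C : Op X Y) : gdrazin (@opmatrix X Y opzero opzero C opzero).
Proof. apply (gdrazin_nilpotent _ 2). intros [x y]. simpl. push. f_equal; group_eq. Qed.

(* diag(BC, CB) is nilpotent of index 3 when (CB)^2 = 0, since (BC)^3 = B (CB)^2 C. *)
Lemma gdrazin_diag_BC_CB (B : Op Y X) (C : Op X Y) :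
  (forall y, C (B (C (B y))) = vzero) ->
  gdrazin (@opmatrix X Y (opcomp B C) opzero opzero (opcomp C B)).
Proof.
  intro hCBCB. apply (gdrazin_nilpotent _ 3). intros [x y]. simpl. push.
  rewrite !hCBCB. push. f_equal; group_eq.
Qed.
End Blocks.

Ltac zero_product h1 h2 h3 h4 :=
  let x := fresh "x" in let y := fresh "y" in
  intros [x y]; simpl;
  repeat (first [rewrite h1 | rewrite h2 | rewrite h3 | rewrite h4 | push1]);
  f_equal; group_eq.

Theorem theorem3p11 (X Y : NormedSpace) (hX : complete X) (hY : complete Y)
  (A : Op X X) (B : Op Y X) (C : Op X Y) (D : Op Y Y)
  (hA : has_gDrazin A) (hD : has_gDrazin D)
  (hABC : forall x : X, A (B (C x)) = vzero)
  (hABD : forall y : Y, A (B (D y)) = vzero)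
  (hDCB : forall y : Y, D (C (B y)) = vzero)
  (hCBCB : forall y : Y, C (B (C (B y))) = vzero) :
  has_gDrazin (opmatrix A B C D).
Proof.
  apply has_gDrazin_iff in hA, hD. apply has_gDrazin_iff.
  assert (hZ : complete (NSprod X Y)) by (apply prod_complete; auto).
  apply gdrazin_of_square.
  (* M^2 = ((N_AB + E_A2) + N_CA) + (N_DC + (E_D2 + N_BD)) + diag(BC, CB), and each
     addition P + Q below has PQ = 0 *)
  pose proof (gdrazin_square _ (gdrazin_diag_left hY A hA)) as gEA.
  pose proof (gdrazin_square _ (@gdrazin_diag_right X Y hY D hD)) as gED.
  pose proof (gdrazin_upper_block (opcomp A B)) as gAB.
  pose proof (gdrazin_lower_block (opcomp C A)) as gCA.
  pose proof (gdrazin_lower_block (opcomp D C)) as gDC.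
  pose proof (gdrazin_upper_block (opcomp B D)) as gBD.
  pose proof (gdrazin_diag_BC_CB B C hCBCB) as gBC.
  assert (gL1 := gdrazin_add hZ _ _ gAB gEA ltac:(zero_product hABC hABD hDCB hCBCB)).
  assert (gL := gdrazin_add hZ _ _ gL1 gCA ltac:(zero_product hABC hABD hDCB hCBCB)).
  assert (gR1 := gdrazin_add hZ _ _ gED gBD ltac:(zero_product hABC hABD hDCB hCBCB)).
  assert (gR := gdrazin_add hZ _ _ gDC gR1 ltac:(zero_product hABC hABD hDCB hCBCB)).
  assert (gLR := gdrazin_add hZ _ _ gL gR ltac:(zero_product hABC hABD hDCB hCBCB)).
  assert (gM2 := gdrazin_add hZ _ _ gLR gBC ltac:(zero_product hABC hABD hDCB hCBCB)).
  eapply gdrazin_ext; [|exact gM2]. intros [x y]. simpl. push. f_equal; group_eq.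
Qed.
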